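(* Let $G=(V,q)$ be a reversible connected graph with non-negative Ollivier curvature, and let $\widetilde G=(V\times V,\widetilde q)$ be a perfect coupling graph of $G$ with Laplacian $\widetilde\Delta$. Define $u_t:V\times V\to[0,1]$ by $u_t(x,y):=\phi_t(d(x,y))$. Then $\partial_tu_t\ge\widetilde\Delta u_t$ on $V\times V$ for all $t>0$.
   Context: A graph $G=(V,q)$ consists of a countable set $V$ and a function $q:V\times V\to[0,\infty)$ such that $\#\{y:q(x,y)>0\}<\infty$ for every $x\in V$; its Laplacian is $\Delta f(x)=\sum_y q(x,y)(f(y)-f(x))$. $G$ is reversible if there is $m:V\to(0,\infty)$ with $q(x,y)m(x)=q(y,x)m(y)$. For reversible $G$, $x\sim y$ means $q(x,y)>0$ and $d$ is the combinatorial graph distance (finite since $G$ is connected). $q_{\min}:=\inf\{q(x,y):q(x,y)>0\}$. Ollivier curvature: for $x\ne y$ and $f:V\to\mathbb R$ let $\nabla_{xy}f=(f(x)-f(y))/d(x,y)$, $\|\nabla f\|_\infty=\sup_{x\ne y}|\nabla_{xy}f|$, and $\kappa(x,y)=\inf\{\nabla_{xy}\Delta f:\ \|\nabla f\|_\infty=1,\ \nabla_{yx}f=1\}$. Non-negative Ollivier curvature means $\kappa(x,y)\ge0$ for all $x\ne y$. $(f\otimes g)(x,y)=f(x)g(y)$. A graph $\widetilde G=(V\times V,\widetilde q)$ with Laplacian $\widetilde\Delta$ is a coupling graph of $G$ if $\widetilde\Delta(f\otimes 1)=\Delta f\otimes 1$ and $\widetilde\Delta(1\otimes f)=1\otimes\Delta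 f$ for all $f$. A transport plan from $x_0$ to $y_0$ is $\rho:V\times V\to[0,\infty)$ with $\sum_{y}\rho(x,y)=q(x_0,x)$ for $x\neq x_0$ and $\sum_x\rho(x,y)=q(y_0,y)$ for $y\ne y_0$; $\mathrm{cost}(\rho)=\sum_{x,y}\rho(x,y)(d(x_0,y_0)-d(x,y))$; $\mu_\rho(k)=\sum_{d(x,y)-d(x_0,y_0)=k}\rho(x,y)$; $\rho$ is optimal if it maximizes cost. A coupling graph is perfect if for all $x_0,y_0$ the plan $\rho_{x_0y_0}:=\widetilde q((x_0,y_0),(\cdot,\cdot))$ is optimal, has $\mu_{\rho_{x_0y_0}}(k)=0$ for $|k|>1$, and has $\mu_{\rho_{x_0y_0}}(-1)\ge 2q_{\min}$ when $x_0\ne y_0$. $\phi_t(n):=P^{\mathbb N_0}_t1_{\mathbb N_+}(n)$, where $P^{\mathbb N_0}_t$ is the heat semigroup (minimal, defined by finite-set exhaustion) of the graph on $\mathbb N_0$ with rates $q_0(x,y)=2q_{\min}$ if $|x-y|=1$ and $x>0$, and $0$ otherwise. *)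

From Stdlib Require Import Reals Lra Lia ZArith Arith List Classical ClassicalEpsilon.
Open Scope R_scope.

Definition sum_fin {A : Type} (g : A -> R) (c : R) : Prop :=
  exists l : list A, NoDup l /\ (forall a, g a <> 0 -> In a l) /\
    c = fold_right (fun a s => g a + s) 0 l.

Definition fsum {A : Type} (g : A -> R) : R :=
  epsilon (inhabits 0) (sum_fin g).

Definition countable (V : Type) : Prop :=
  exists enc : V -> nat, forall x y, enc x = enc y -> x = y.

Definition is_graph {V : Type} (q : V -> V -> R) : Prop :=
  (forall x y, 0 <= q x y) /\
  (forall x, exists l : list V, forall y, 0 < q x y -> In y l).

Definition lap {V : Type} (q : V -> V -> R) (f : V -> R) (x : V) : R :=
  fsum (fun y => q x y * (f y - f x)).

Definition reversible {V : Type} (q : V -> V -> R) : Prop :=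
  exists m : V -> R, (forall x, 0 < m x) /\ (forall x y, q x y * m x = q y x * m y).

Inductive walk {V : Type} (q : V -> V -> R) : nat -> V -> V -> Prop :=
| walk0 : forall x, walk q 0 x x
| walkS : forall n x y z, 0 < q x y -> walk q n y z -> walk q (S n) x z.

Definition connected {V : Type} (q : V -> V -> R) : Prop :=
  forall x y, exists n, walk q n x y.

Definition gdist {V : Type} (q : V -> V -> R) (x y : V) : nat :=
  epsilon (inhabits 0%nat)
    (fun n => walk q n x y /\ forall m, walk q m x y -> (n <= m)%nat).

Definition is_qmin {V : Type} (q : V -> V -> R) (m : R) : Prop :=
  (forall x y, 0 < q x y -> m <= q x y) /\
  (forall b, (forall x y, 0 < q x y -> b <= q x y) -> b <= m).

Definition grad {V : Type} (q : V -> V -> R) (f : V -> R) (x y : V) : R :=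
  (f x - f y) / INR (gdist q x y).

Definition grad_norm_eq {V : Type} (q : V -> V -> R) (f : V -> R) (c : R) : Prop :=
  is_lub (fun r => exists a b : V, a <> b /\ r = Rabs (grad q f a b)) c.

Definition kappa_ge {V : Type} (q : V -> V -> R) (x y : V) (c : R) : Prop :=
  forall f : V -> R, grad_norm_eq q f 1 -> grad q f y x = 1 ->
    c <= grad q (lap q f) x y.

Definition nonneg_ollivier {V : Type} (q : V -> V -> R) : Prop :=
  forall x y, x <> y -> kappa_ge q x y 0.

Definition is_coupling {V : Type} (q : V -> V -> R)
    (qt : V * V -> V * V -> R) : Prop :=
  is_graph qt /\
  forall f : V -> R,
    (forall x y, lap qt (fun p => f (fst p)) (x, y) = lap q f x) /\
    (forall x y, lap qt (fun p => f (snd p)) (x, y) = lap q f y).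

Definition is_plan {V : Type} (q : V -> V -> R) (x0 y0 : V)
    (rho : V * V -> R) : Prop :=
  (forall p, 0 <= rho p) /\
  (forall x, x <> x0 -> sum_fin (fun y => rho (x, y)) (q x0 x)) /\
  (forall y, y <> y0 -> sum_fin (fun x => rho (x, y)) (q y0 y)).

Definition cost {V : Type} (q : V -> V -> R) (x0 y0 : V) (rho : V * V -> R) : R :=
  fsum (fun p => rho p * (INR (gdist q x0 y0) - INR (gdist q (fst p) (snd p)))).

Definition mu {V : Type} (q : V -> V -> R) (x0 y0 : V) (rho : V * V -> R)
    (k : Z) : R :=
  fsum (fun p => if Z.eq_dec (Z.of_nat (gdist q (fst p) (snd p))
                              - Z.of_nat (gdist q x0 y0))%Z k
                 then rho p else 0).

Definition optimal_plan {V : Type} (q : V -> V -> R) (x0 y0 : V)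
    (rho : V * V -> R) : Prop :=
  is_plan q x0 y0 rho /\
  forall rho', is_plan q x0 y0 rho' -> cost q x0 y0 rho' <= cost q x0 y0 rho.

Definition perfect_coupling {V : Type} (q : V -> V -> R) (qmin : R)
    (qt : V * V -> V * V -> R) : Prop :=
  is_coupling q qt /\
  forall x0 y0 : V,
    optimal_plan q x0 y0 (qt (x0, y0)) /\
    (forall k : Z, (1 < Z.abs k)%Z -> mu q x0 y0 (qt (x0, y0)) k = 0) /\
    (x0 <> y0 -> 2 * qmin <= mu q x0 y0 (qt (x0, y0)) (-1)%Z).

Definition q0 (a : R) (x y : nat) : R :=
  if (Nat.ltb 0 x && (Nat.eqb x (S y) || Nat.eqb y (S x)))%bool then a else 0.

(* Laplacian on N_0: sum_j q0(k,j)(u j - u k); q0(k,j) = 0 for j > k+1 *)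
Definition lapN (a : R) (u : nat -> R) (k : nat) : R :=
  sum_f_R0 (fun j => q0 a k j * (u j - u k)) (S k).

(* u t = P^{B_N}_t f : Dirichlet heat semigroup on B_N = {0..N} *)
Definition dirichlet_sol (a : R) (N : nat) (f : nat -> R) (u : R -> nat -> R) : Prop :=
  (forall t k, (N < k)%nat -> u t k = 0) /\
  (forall k, (k <= N)%nat -> u 0 k = f k) /\
  (forall t k, (k <= N)%nat ->
     derivable_pt_lim (fun s => u s k) t (lapN a (u t) k)).

(* minimal heat semigroup: P_t f (n) = lim_N P^{B_N}_t f (n) *)
Definition heat_min (a : R) (f : nat -> R) (t : R) (n : nat) (v : R) : Prop :=
  (forall N, exists u, dirichlet_sol a N f u) /\
  (forall U : nat -> R -> nat -> R, (forall N, dirichlet_sol a N f (U N)) ->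
     Un_cv (fun N => U N t n) v).

Definition ind_pos (n : nat) : R := if Nat.ltb 0 n then 1 else 0.

(* phi_t(n) = P^{N_0}_t 1_{N_+} (n) with rate a = 2 q_min *)
Definition phi (a t : R) (n : nat) : R :=
  epsilon (inhabits 0) (heat_min a ind_pos t n).

From Stdlib Require Import Reals.
From Stdlib Require Import Lra Lia List Permutation ZArith Classical ClassicalEpsilon
  FunctionalExtensionality.
From Coquelicot Require Coquelicot.
Open Scope R_scope.

(** Fix [(x, y)], write [n = d(x, y)], [rho = qt (x, y)], [a = 2 qmin] and [mu k] for the
    mass that [rho] sends from distance [n] to distance [n + k].  A perfect coupling only
    charges [k = -1, 0, 1], hence
      [Delta~ u_t (x, y) = mu(-1) (phi(n-1) - phi(n)) + mu(1) (phi(n+1) - phi(n))],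
    whereas [d/dt phi_t(n) = a (phi(n+1) + phi(n-1) - 2 phi(n))] for [n >= 1] (and [0] at
    [n = 0]).  The inequality follows from three facts:
    - [mu(1) <= mu(-1)]: the cost [mu(-1) - mu(1)] of the optimal plan [rho] dominates that
      of a plan of non-negative cost, which exists by non-negative curvature and
      Kantorovich duality (Farkas' alternative, proved by Fourier-Motzkin elimination);
    - [mu(-1) >= a], by perfection of the coupling;
    - [phi_t] is non-decreasing and concave.  [phi] is the increasing limit of the
      Dirichlet solutions on [{0..N}], given by exponential power series; the weak
      maximum principle yields their bounds, their monotonicity in [N], their uniqueness,
      their concavity and a Taylor estimate uniform in [N], whence the time derivative. *)

Definition sumL {A : Type} (l : list A) (g : A -> R) : R :=
  fold_right (fun a s => g a + s) 0 l.

Lemma sumL_cons {A} (a : A) l g : sumL (a :: l) g = g a + sumL l g.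
Proof. reflexivity. Qed.

Lemma sumL_app {A} (l1 l2 : list A) g : sumL (l1 ++ l2) g = sumL l1 g + sumL l2 g.
Proof. induction l1; simpl; [ring|]. unfold sumL in *; simpl. rewrite IHl1. ring. Qed.

Lemma sumL_ext {A} (l : list A) g h :
  (forall a, In a l -> g a = h a) -> sumL l g = sumL l h.
Proof.
  induction l as [|a l IH]; intros H; cbn; auto.
  rewrite H by (left; auto). unfold sumL in IH; rewrite IH; auto.
  intros; apply H; right; auto.
Qed.

Lemma sumL_plus {A} (l : list A) g h : sumL l (fun a => g a + h a) = sumL l g + sumL l h.
Proof. induction l; unfold sumL in *; cbn; [ring|]. rewrite IHl; ring. Qed.

Lemma sumL_scal {A} (l : list A) c g : sumL l (fun a => c * g a) = c * sumL l g.
Proof. induction l; unfold sumL in *; cbn; [ring|]. rewrite IHl; ring. Qed.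

Lemma sumL_opp {A} (l : list A) g : sumL l (fun a => - g a) = - sumL l g.
Proof. induction l; unfold sumL in *; cbn; [ring|]. rewrite IHl; ring. Qed.

Lemma sumL_zero {A} (l : list A) : sumL l (fun _ => 0) = 0.
Proof. induction l; unfold sumL in *; cbn; [ring|]. rewrite IHl; ring. Qed.

Lemma sumL_le {A} (l : list A) g h :
  (forall a, In a l -> g a <= h a) -> sumL l g <= sumL l h.
Proof.
  induction l as [|a l IH]; intros H; cbn; [lra|].
  apply Rplus_le_compat; [apply H; left; auto | apply IH; intros; apply H; right; auto].
Qed.

Lemma sumL_nonneg {A} (l : list A) g : (forall a, In a l -> 0 <= g a) -> 0 <= sumL l g.
Proof. intros H. rewrite <- (sumL_zero l). apply sumL_le; auto. Qed.

Lemma sumL_perm {A} (l1 l2 : list A) g : Permutation l1 l2 -> sumL l1 g = sumL l2 g.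
Proof. induction 1; unfold sumL in *; cbn; lra. Qed.

Lemma sumL_nonneg_zero {A} (l : list A) g :
  (forall a, In a l -> 0 <= g a) -> sumL l g = 0 -> forall a, In a l -> g a = 0.
Proof.
  induction l as [|a l IH]; intros H S b Hb; [destruct Hb|]. rewrite sumL_cons in S.
  assert (0 <= g a) by (apply H; left; auto).
  assert (0 <= sumL l g) by (apply sumL_nonneg; intros; apply H; right; auto).
  destruct Hb as [<-|Hb]; [lra|]. apply IH; auto; [intros; apply H; right; auto | lra].
Qed.

Definition eqdec {A : Type} (x y : A) : {x = y} + {x <> y} :=
  excluded_middle_informative (x = y).

Lemma sumL_ind {A} (l : list A) (x : A) (F : A -> R) : NoDup l -> In x l ->
  sumL l (fun a => if eqdec a x then F a else 0) = F x.
Proof.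
  induction l as [|a l IH]; intros N H; [destruct H|]. inversion N; subst.
  rewrite sumL_cons. destruct (eqdec a x) as [<-|Hax].
  - rewrite (sumL_ext l _ (fun _ => 0)), sumL_zero; [ring|].
    intros b Hb. destruct (eqdec b a); [subst; contradiction | auto].
  - destruct H as [H|H]; [contradiction|]. rewrite IH; auto; ring.
Qed.

Lemma sumL_prod {A B} (X : list A) (Y : list B) (h : A * B -> R) :
  sumL (list_prod X Y) h = sumL X (fun x => sumL Y (fun y => h (x, y))).
Proof.
  induction X as [|x X IH]; cbn [list_prod]; auto. rewrite sumL_app, sumL_cons, IH. f_equal.
  clear. induction Y; cbn [map]; auto. rewrite !sumL_cons, IHY; auto.
Qed.

Lemma sum_fin_unique {A} (g : A -> R) c1 c2 : sum_fin g c1 -> sum_fin g c2 -> c1 = c2.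
Proof.
  intros [l1 [N1 [C1 E1]]] [l2 [N2 [C2 E2]]].
  change (c1 = sumL l1 g) in E1. change (c2 = sumL l2 g) in E2. subst.
  set (nz := fun a => if Req_EM_T (g a) 0 then false else true).
  assert (Hfilter : forall l, sumL l g = sumL (filter nz l) g).
  { induction l as [|a l IH]; cbn [filter]; auto. unfold nz at 1.
    destruct (Req_EM_T (g a) 0) as [E|E]; rewrite !sumL_cons, IH; [rewrite E; ring | auto]. }
  rewrite (Hfilter l1), (Hfilter l2). apply sumL_perm.
  apply NoDup_Permutation; try (apply NoDup_filter; auto).
  intros x; rewrite !filter_In; unfold nz; destruct (Req_EM_T (g x) 0); split;
    intros [H1 H2]; try discriminate; split; auto.
Qed.

Lemma sum_fin_list {A} (g : A -> R) l :
  NoDup l -> (forall a, g a <> 0 -> In a l) -> sum_fin g (sumL l g).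
Proof. intros N C. exists l; repeat split; auto. Qed.

Lemma fsum_spec {A} (g : A -> R) c : sum_fin g c -> fsum g = c.
Proof.
  intros H. unfold fsum. apply (sum_fin_unique g); auto.
  apply epsilon_spec. exists c; auto.
Qed.

Lemma fsum_list {A} (g : A -> R) l :
  NoDup l -> (forall a, g a <> 0 -> In a l) -> fsum g = sumL l g.
Proof. intros; apply fsum_spec, sum_fin_list; auto. Qed.

Lemma nodup_list {A} (l : list A) : exists l', NoDup l' /\ forall y, In y l <-> In y l'.
Proof. exists (nodup eqdec l). split; [apply NoDup_nodup | intros; rewrite nodup_In; tauto]. Qed.

(** Farkas' alternative, proved by Fourier–Motzkin elimination.
    A constraint [(a, b)] stands for [a . z <= b]; a system is either feasible,
    or a non-negative combination of its constraints reads [0 . z <= b] with [b < 0]. *)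

Section FourierMotzkin.
Variable I : Type.

Definition cstr : Type := ((I -> R) * R)%type.

Inductive cone (L : list cstr) : (I -> R) -> R -> Prop :=
| cone0 : cone L (fun _ => 0) 0
| coneS : forall a b c ab bb, cone L a b -> In (ab, bb) L -> 0 <= c ->
    cone L (fun i => a i + c * ab i) (b + c * bb).

Lemma cone_single L a b : In (a, b) L -> cone L a b.
Proof.
  intros H.
  replace a with (fun i => 0 + 1 * a i) by (apply functional_extensionality; intros; ring).
  replace b with (0 + 1 * b) by ring. apply coneS; auto; [constructor | lra].
Qed.

Lemma cone_add L a b a' b' :
  cone L a b -> cone L a' b' -> cone L (fun i => a i + a' i) (b + b').
Proof.
  intros H1 H2. induction H2 as [|a0 b0 c ab bb _ IH Hin Hc].
  - replace (fun i => a i + 0) with a by (apply functional_extensionality; intros; ring).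
    replace (b + 0) with b by ring; auto.
  - replace (fun i => a i + (a0 i + c * ab i)) with (fun i => (a i + a0 i) + c * ab i)
      by (apply functional_extensionality; intros; ring).
    replace (b + (b0 + c * bb)) with ((b + b0) + c * bb) by ring. apply coneS; auto.
Qed.

Lemma cone_scal L a b c : 0 <= c -> cone L a b -> cone L (fun i => c * a i) (c * b).
Proof.
  intros Hc H. induction H as [|a b c0 ab bb _ IH Hin Hc0].
  - replace (fun _ : I => c * 0) with (fun _ : I => 0)
      by (apply functional_extensionality; intros; ring).
    replace (c * 0) with 0 by ring; constructor.
  - replace (fun i => c * (a i + c0 * ab i)) with (fun i => c * a i + (c * c0) * ab i)
      by (apply functional_extensionality; intros; ring).
    replace (c * (b + c0 * bb)) with (c * b + (c * c0) * bb) by ring.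
    apply coneS; auto. apply Rmult_le_pos; auto.
Qed.

Lemma cone_mono L L' a b :
  (forall ab bb, In (ab, bb) L' -> cone L ab bb) -> cone L' a b -> cone L a b.
Proof. intros H C. induction C; [constructor | apply cone_add; auto; apply cone_scal; auto]. Qed.

Lemma cone_ind_prop L (P : (I -> R) -> R -> Prop) :
  P (fun _ => 0) 0 ->
  (forall a b c ab bb, P a b -> In (ab, bb) L -> 0 <= c ->
     P (fun i => a i + c * ab i) (b + c * bb)) ->
  forall a b, cone L a b -> P a b.
Proof. intros H0 HS a b C; induction C; eauto. Qed.

Definition dot (vars : list I) (a x : I -> R) : R := sumL vars (fun i => a i * x i).

Definition feasible (vars : list I) (L : list cstr) : Prop :=
  exists x, forall ab bb, In (ab, bb) L -> dot vars ab x <= bb.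

Definition certificate (vars : list I) (L : list cstr) : Prop :=
  exists a b, cone L a b /\ (forall i, In i vars -> a i = 0) /\ b < 0.

Lemma dot_lin vars a b c1 c2 x :
  dot vars (fun i => c1 * a i + c2 * b i) x = c1 * dot vars a x + c2 * dot vars b x.
Proof. unfold dot. rewrite <- !sumL_scal, <- sumL_plus. apply sumL_ext; intros; ring. Qed.

(* Elimination of the variable [v]: keep the constraints not involving [v] and add
   the positive combination of every pair of constraints with opposite signs on [v]. *)
Definition zero_at (v : I) (c : cstr) : bool := if Req_EM_T (fst c v) 0 then true else false.
Definition pos_at (v : I) (c : cstr) : bool := if Rlt_dec 0 (fst c v) then true else false.
Definition neg_at (v : I) (c : cstr) : bool := if Rlt_dec (fst c v) 0 then true else false.
Definition comb (v : I) (p n : cstr) : cstr :=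
  (fun i => (- fst n v) * fst p i + fst p v * fst n i, (- fst n v) * snd p + fst p v * snd n).
Definition elim (v : I) (L : list cstr) : list cstr :=
  filter (zero_at v) L ++
  flat_map (fun p => map (comb v p) (filter (neg_at v) L)) (filter (pos_at v) L).

Lemma in_elim_comb v L p n :
  In p L -> In n L -> 0 < fst p v -> fst n v < 0 -> In (comb v p n) (elim v L).
Proof.
  intros Hp Hn Hpv Hnv. apply in_or_app; right. apply in_flat_map. exists p. split.
  - apply filter_In; split; auto. unfold pos_at. destruct (Rlt_dec 0 (fst p v)); auto; lra.
  - apply in_map, filter_In; split; auto. unfold neg_at. destruct (Rlt_dec (fst n v) 0); auto; lra.
Qed.

Lemma elim_in v L ab bb : In (ab, bb) (elim v L) ->
  (In (ab, bb) L /\ ab v = 0) \/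
  exists p n, In p L /\ In n L /\ 0 < fst p v /\ fst n v < 0 /\ (ab, bb) = comb v p n.
Proof.
  unfold elim; intros H. apply in_app_or in H. destruct H as [H|H].
  - left. apply filter_In in H. destruct H as [H1 H2]. unfold zero_at in H2; cbn in H2.
    destruct (Req_EM_T (ab v) 0); [auto|discriminate].
  - right. apply in_flat_map in H. destruct H as [p [Hp H]]. apply in_map_iff in H.
    destruct H as [n [E Hn]]. apply filter_In in Hp, Hn.
    destruct Hp as [Hp Hp2]; destruct Hn as [Hn Hn2]. unfold pos_at, neg_at in *.
    destruct (Rlt_dec 0 (fst p v)); [|discriminate].
    destruct (Rlt_dec (fst n v) 0); [|discriminate]. exists p, n; auto.
Qed.

Lemma sep_exists (Lo Up : list R) : (forall l u, In l Lo -> In u Up -> l <= u) ->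
  exists t, (forall l, In l Lo -> l <= t) /\ (forall u, In u Up -> t <= u).
Proof.
  induction Lo as [|a Lo IH]; intros H.
  - clear H. induction Up as [|a Up [t [_ Ht]]]; [exists 0; split; intros ? []|].
    exists (Rmin a t); split; [intros l []|]. intros u [<-|Hu]; [apply Rmin_l|].
    eapply Rle_trans; [apply Rmin_r | auto].
  - destruct IH as [t [H1 H2]]; [intros; apply H; auto; right; auto|].
    exists (Rmax a t); split.
    + intros l [<-|Hl]; [apply Rmax_l|]. eapply Rle_trans; [apply H1; auto | apply Rmax_r].
    + intros u Hu. apply Rmax_lub; auto. apply H; auto; left; auto.
Qed.

(* Given a solution [x'] of the eliminated system, the value of [v] solving [c]
   with equality; lower bounds come from negative, upper bounds from positive [fst c v]. *)
Definition vbound (vs : list I) (x' : I -> R) (v : I) (c : cstr) : R :=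
  (snd c - dot vs (fst c) x') / fst c v.

Lemma vbound_compatible vs x' v L p n :
  (forall ab bb, In (ab, bb) (elim v L) -> dot vs ab x' <= bb) ->
  In p L -> In n L -> 0 < fst p v -> fst n v < 0 ->
  vbound vs x' v n <= vbound vs x' v p.
Proof.
  intros Hx' Hp Hn pv nv. pose proof (in_elim_comb v L p n Hp Hn pv nv) as Hc.
  destruct (comb v p n) as [cab cbb] eqn:Ec. apply Hx' in Hc.
  unfold comb in Ec. injection Ec as E1 E2. rewrite <- E1, dot_lin, <- E2 in Hc.
  unfold vbound. destruct p as [pa pb0]; destruct n as [na nb0]; cbn in *.
  apply Rmult_le_reg_r with (r := pa v * (- na v)); [nra|].
  replace ((nb0 - dot vs na x') / na v * (pa v * - na v))
    with (- (nb0 - dot vs na x') * pa v) by (field; lra).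
  replace ((pb0 - dot vs pa x') / pa v * (pa v * - na v))
    with ((pb0 - dot vs pa x') * (- na v)) by (field; lra).
  nra.
Qed.

(* A solution of [elim v L] extends to one of [L]: the bounds on [v] are compatible. *)
Lemma elim_feasible v vs L : ~ In v vs -> feasible vs (elim v L) -> feasible (v :: vs) L.
Proof.
  intros Hv [x' Hx'].
  destruct (sep_exists (map (vbound vs x' v) (filter (neg_at v) L))
                       (map (vbound vs x' v) (filter (pos_at v) L))) as [t [Ht1 Ht2]].
  { intros l u Hl Hu. apply in_map_iff in Hl, Hu.
    destruct Hl as [n [<- Hn]], Hu as [p [<- Hp]]. apply filter_In in Hn, Hp.
    destruct Hn as [Hn Hn2], Hp as [Hp Hp2]. unfold pos_at, neg_at in *.
    destruct (Rlt_dec 0 (fst p v)); [|discriminate].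
    destruct (Rlt_dec (fst n v) 0); [|discriminate].
    apply (vbound_compatible vs x' v L); auto. }
  exists (fun i => if eqdec i v then t else x' i). intros ab bb Hin.
  unfold dot. rewrite sumL_cons. destruct (eqdec v v) as [_|]; [|congruence].
  rewrite (sumL_ext vs _ (fun i => ab i * x' i))
    by (intros i Hi; destruct (eqdec i v); [subst; contradiction | auto]).
  fold (dot vs ab x').
  destruct (Rtotal_order (ab v) 0) as [Hn|[Hz|Hp]].
  - assert (Hi : In (ab, bb) (filter (neg_at v) L))
      by (apply filter_In; split; auto; unfold neg_at; cbn; destruct (Rlt_dec (ab v) 0); auto; lra).
    specialize (Ht1 _ (in_map (vbound vs x' v) _ _ Hi)). unfold vbound in Ht1; cbn in Ht1.
    apply Rmult_le_reg_r with (r := - ab v); [lra|].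
    assert ((bb - dot vs ab x') / ab v * (- ab v) = - (bb - dot vs ab x')) by (field; lra).
    nra.
  - rewrite Hz. assert (Hi : In (ab, bb) (elim v L)).
    { apply in_or_app; left. apply filter_In; split; auto.
      unfold zero_at; cbn. destruct (Req_EM_T (ab v) 0); auto. }
    apply Hx' in Hi. lra.
  - assert (Hi : In (ab, bb) (filter (pos_at v) L))
      by (apply filter_In; split; auto; unfold pos_at; cbn; destruct (Rlt_dec 0 (ab v)); auto; lra).
    specialize (Ht2 _ (in_map (vbound vs x' v) _ _ Hi)). unfold vbound in Ht2; cbn in Ht2.
    assert ((bb - dot vs ab x') / ab v * ab v = bb - dot vs ab x') by (field; lra). nra.
Qed.

Lemma elim_cone v L ab bb : In (ab, bb) (elim v L) -> cone L ab bb /\ ab v = 0.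
Proof.
  intros Hin. apply elim_in in Hin.
  destruct Hin as [[Hin Z]|[[pa pb0] [[na nb0] [Hp [Hn [Hpv [Hnv E]]]]]]].
  - split; auto. apply cone_single; auto.
  - cbn in *. injection E as E1 E2. subst ab bb. split; [|ring].
    apply (cone_add L (fun i => - na v * pa i) (- na v * pb0) (fun i => pa v * na i) (pa v * nb0));
      apply cone_scal; try lra; apply cone_single; auto.
Qed.

Lemma elim_certificate v vs L : certificate vs (elim v L) -> certificate (v :: vs) L.
Proof.
  intros [a [b [C [Ha Hb]]]]. exists a, b. split; [|split; auto].
  - apply (cone_mono _ (elim v L)); auto. intros ab bb Hin. apply (elim_cone v L); auto.
  - intros i [<-|Hi]; auto. clear Ha Hb. revert a b C. apply cone_ind_prop; auto.
    intros a b c ab bb Ha Hin _. rewrite Ha, (proj2 (elim_cone v L ab bb Hin)). ring.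
Qed.

Theorem farkas vars : NoDup vars -> forall L, feasible vars L \/ certificate vars L.
Proof.
  induction vars as [|v vs IH]; intros ND L.
  - destruct (classic (forall ab bb, In (ab, bb) L -> 0 <= bb)) as [H|H].
    + left. exists (fun _ => 0). intros ab bb Hin. apply H in Hin. auto.
    + right. apply not_all_ex_not in H as [ab H]. apply not_all_ex_not in H as [bb H].
      apply imply_to_and in H as [Hin H]. exists ab, bb.
      split; [apply cone_single; auto | split; [intros i [] | lra]].
  - inversion ND; subst. destruct (IH H2 (elim v L)) as [F|C].
    + left. apply elim_feasible; auto.
    + right. apply elim_certificate; auto.
Qed.
End FourierMotzkin.

Definition minL {A} (g : A -> R) (x0 : A) (l : list A) : R :=
  fold_right (fun x m => Rmin (g x) m) (g x0) l.

Lemma minL_le {A} g (x0 : A) l x : In x (x0 :: l) -> minL g x0 l <= g x.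
Proof.
  induction l as [|b l IH]; intros H; unfold minL in *; cbn in *.
  - destruct H as [<-|[]]. apply Rle_refl.
  - destruct H as [<-|[<-|H]]; [| apply Rmin_l |];
      (eapply Rle_trans; [apply Rmin_r | apply IH; tauto]).
Qed.

Lemma minL_att {A} g (x0 : A) l : exists x, In x (x0 :: l) /\ minL g x0 l = g x.
Proof.
  induction l as [|b l [x [Hx E]]]; unfold minL in *; cbn; [exists x0; auto|].
  unfold Rmin at 1. destruct (Rle_dec (g b) (fold_right (fun x m => Rmin (g x) m) (g x0) l)).
  - exists b; cbn; auto.
  - exists x. split; auto. cbn in Hx |- *. tauto.
Qed.

Lemma minL_ge {A} g (x0 : A) l c : (forall x, In x (x0 :: l) -> c <= g x) -> c <= minL g x0 l.
Proof. intros H. destruct (minL_att g x0 l) as [x [Hx ->]]. auto. Qed.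

(** The combinatorial distance of a reversible connected graph is a metric. *)

Lemma least_exists (P : nat -> Prop) :
  (exists n, P n) -> exists n, P n /\ forall m, P m -> (n <= m)%nat.
Proof.
  intros [n Hn]. revert Hn. induction n as [n IH] using (well_founded_induction Wf_nat.lt_wf).
  intros Hn. destruct (classic (exists m, (m < n)%nat /\ P m)) as [[m [Hm Pm]]|H].
  - apply (IH m Hm Pm).
  - exists n; split; auto. intros m Pm. destruct (Nat.lt_ge_cases m n); auto.
    exfalso; apply H; eauto.
Qed.

Section Distance.
Context {V : Type}.
Variable q : V -> V -> R.
Hypothesis Hg : is_graph q.
Hypothesis Hr : reversible q.
Hypothesis Hc : connected q.

Notation d := (gdist q).

Lemma gdist_spec x y : walk q (d x y) x y /\ forall m, walk q m x y -> (d x y <= m)%nat.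
Proof. unfold gdist. apply epsilon_spec, least_exists, Hc. Qed.

Lemma walk_app n m x y z : walk q n x y -> walk q m y z -> walk q (n + m) x z.
Proof. induction 1; intros Hw; cbn; auto. econstructor; eauto. Qed.

(* Reversibility makes the edge relation symmetric. *)
Lemma q_sym x y : 0 < q x y -> 0 < q y x.
Proof.
  intros H. destruct Hr as [m [Hm E]]. specialize (E x y).
  pose proof (Hm x). pose proof (Hm y). pose proof (proj1 Hg y x). nra.
Qed.

Lemma walk_rev n x y : walk q n x y -> walk q n y x.
Proof.
  induction 1 as [|n x y z Hxy _ IH]; [constructor|].
  replace (S n) with (n + 1)%nat by lia. apply walk_app with y; auto.
  econstructor; [apply q_sym; eauto | constructor].
Qed.

Lemma gdist_sym x y : d x y = d y x.
Proof.
  apply Nat.le_antisymm; [apply (proj2 (gdist_spec x y)) | apply (proj2 (gdist_spec y x))];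
    apply walk_rev, gdist_spec.
Qed.

Lemma gdist_tri x y z : INR (d x z) <= INR (d x y) + INR (d y z).
Proof.
  rewrite <- plus_INR. apply le_INR, (proj2 (gdist_spec x z)).
  apply walk_app with y; apply gdist_spec.
Qed.

Lemma gdist_refl x : d x x = 0%nat.
Proof. pose proof (proj2 (gdist_spec x x) 0%nat (walk0 q x)). lia. Qed.

Lemma gdist_pos x y : x <> y -> (1 <= d x y)%nat.
Proof.
  intros H. destruct (d x y) eqn:E; [|lia]. exfalso.
  pose proof (proj1 (gdist_spec x y)) as W. rewrite E in W. inversion W; subst; auto.
Qed.

Lemma gdist_pos_R x y : x <> y -> 1 <= INR (d x y).
Proof. intros H. apply (le_INR 1), gdist_pos; auto. Qed.

Lemma lap_list (f : V -> R) x (l : list V) :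
  NoDup l -> (forall y, 0 < q x y -> In y l) ->
  lap q f x = sumL l (fun y => q x y * (f y - f x)).
Proof.
  intros N C. unfold lap. apply fsum_list; auto. intros y H. apply C.
  destruct (Rle_lt_or_eq_dec _ _ (proj1 Hg x y)) as [|E]; auto.
  exfalso; apply H; rewrite <- E; ring.
Qed.

(* A 1-Lipschitz function realising the distance between [x0] and [y0]
   is admissible in the definition of [kappa(x0, y0)]. *)
Definition lipschitz1 (f : V -> R) : Prop := forall u v, f u <= f v + INR (d u v).

Lemma lipschitz_grad_norm f x0 y0 : x0 <> y0 -> lipschitz1 f ->
  f y0 - f x0 = INR (d x0 y0) -> grad_norm_eq q f 1.
Proof.
  intros Hne Hlip Hf. split.
  - intros r [u [v [Huv ->]]]. unfold grad. pose proof (gdist_pos_R u v Huv).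
    unfold Rdiv. rewrite Rabs_mult, Rabs_inv, (Rabs_pos_eq (INR (d u v))) by lra.
    apply Rmult_le_reg_r with (INR (d u v)); [lra|].
    rewrite Rmult_assoc, Rinv_l, Rmult_1_r by lra.
    pose proof (Hlip u v). pose proof (Hlip v u). rewrite (gdist_sym v u) in *.
    apply Rabs_le; lra.
  - intros bnd Hub. apply Hub. exists y0, x0. split; auto.
    unfold grad. rewrite (gdist_sym y0 x0), Hf. pose proof (gdist_pos_R x0 y0 Hne).
    replace (INR (d x0 y0) / INR (d x0 y0)) with 1 by (field; lra). rewrite Rabs_R1; auto.
Qed.

Lemma curvature_lap_mono (Hk : nonneg_ollivier q) f x0 y0 : x0 <> y0 -> lipschitz1 f ->
  f y0 - f x0 = INR (d x0 y0) -> lap q f y0 <= lap q f x0.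
Proof.
  intros Hne Hlip Hf. pose proof (gdist_pos_R x0 y0 Hne).
  assert (Hgr : grad q f y0 x0 = 1) by (unfold grad; rewrite (gdist_sym y0 x0), Hf; field; lra).
  pose proof (Hk x0 y0 Hne f (lipschitz_grad_norm f x0 y0 Hne Hlip Hf) Hgr) as K.
  unfold grad, Rdiv in K. assert (0 < / INR (d x0 y0)) by (apply Rinv_0_lt_compat; lra). nra.
Qed.
End Distance.

(** Existence of a transport plan of non-negative cost (Kantorovich duality).
    The plans supported on the neighbourhoods [Xl x Yl] of [x0] and [y0] with cost
    [>= 0] are the solutions of a finite linear system [plan_system].  A Farkas certificate
    for [plan_system] would produce potentials [al], [be] whose infimal convolution with the
    distance is a 1-Lipschitz function with [Delta f (x0) < Delta f (y0)],
    which non-negative curvature forbids. *)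

Lemma NoDup_prod {A B} (X : list A) (Y : list B) : NoDup X -> NoDup Y -> NoDup (list_prod X Y).
Proof.
  intros NX NY. induction NX; cbn; [constructor|]. apply NoDup_app; auto.
  - apply NoDup_map_NoDup_ForallPairs; auto. intros u v _ _ E; injection E; auto.
  - intros p Hp1 Hp2. apply in_map_iff in Hp1. destruct Hp1 as [y [<- _]].
    apply in_prod_iff in Hp2. tauto.
Qed.

Section TransportLP.
Variable V : Type.
Variable q : V -> V -> R.
Hypothesis Hg : is_graph q.
Variables x0 y0 : V.
Variables X' Y' : list V.
Hypothesis NX : NoDup (x0 :: X').
Hypothesis NY : NoDup (y0 :: Y').
Hypothesis CX : forall y, 0 < q x0 y -> y = x0 \/ In y X'.
Hypothesis CY : forall y, 0 < q y0 y -> y = y0 \/ In y Y'.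

Notation d := (gdist q).
Definition Xl : list V := x0 :: X'.
Definition Yl : list V := y0 :: Y'.
Definition Pl : list (V * V) := list_prod Xl Yl.

Definition gain (p : V * V) : R := INR (d x0 y0) - INR (d (fst p) (snd p)).

(* Constraints: [z p >= 0]; row sums [= q x0 x] and column sums [= q y0 y], each as
   two inequalities of sign [s = 1] and [s = -1]; and total gain [>= 0]. *)
Definition c_nonneg (p : V * V) : cstr (V * V) := ((fun i => if eqdec i p then -1 else 0), 0).
Definition c_row (s : R) (x : V) : cstr (V * V) :=
  ((fun i => if eqdec (fst i) x then s else 0), s * q x0 x).
Definition c_col (s : R) (y : V) : cstr (V * V) :=
  ((fun i => if eqdec (snd i) y then s else 0), s * q y0 y).
Definition c_gain : cstr (V * V) := ((fun i => - gain i), 0).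
Definition plan_system : list (cstr (V * V)) :=
  map c_nonneg Pl ++ map (c_row 1) X' ++ map (c_row (-1)) X' ++
  map (c_col 1) Y' ++ map (c_col (-1)) Y' ++ c_gain :: nil.

Lemma Pl_NoDup : NoDup Pl.
Proof. apply NoDup_prod; auto. Qed.

Lemma in_plan_system c : In c plan_system <->
  (exists p, c = c_nonneg p /\ In p Pl) \/
  (exists s x, c = c_row s x /\ (s = 1 \/ s = -1) /\ In x X') \/
  (exists s y, c = c_col s y /\ (s = 1 \/ s = -1) /\ In y Y') \/ c = c_gain.
Proof.
  unfold plan_system. rewrite !in_app_iff, !in_map_iff. cbn [In]. split.
  - intros [[p [E Hp]]|[[u [E Hu]]|[[u [E Hu]]|[[u [E Hu]]|[[u [E Hu]]|[E|[]]]]]]]; subst c;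
      eauto 10.
  - intros [[p [E Hp]]|[[s [u [E [Hs Hu]]]]|[[s [u [E [Hs Hu]]]]|E]]]; subst c;
      try destruct Hs as [-> | ->]; eauto 10.
Qed.

Lemma dot_row (z : V * V -> R) s x : In x Xl ->
  dot (V * V) Pl (fst (c_row s x)) z = s * sumL Yl (fun y => z (x, y)).
Proof.
  intros Hx. unfold dot, Pl, c_row. cbn [fst]. rewrite sumL_prod. cbn [fst].
  rewrite <- (sumL_ind Xl x (fun x' => s * sumL Yl (fun y => z (x', y)))) by (auto; apply NX).
  apply sumL_ext. intros x' _. rewrite <- sumL_scal.
  destruct (eqdec x' x); [reflexivity|].
  rewrite (sumL_ext Yl _ (fun _ => 0)); [apply sumL_zero | intros; ring].
Qed.

Lemma dot_col (z : V * V -> R) s y : In y Yl ->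
  dot (V * V) Pl (fst (c_col s y)) z = s * sumL Xl (fun x => z (x, y)).
Proof.
  intros Hy. unfold dot, Pl, c_col. cbn [fst]. rewrite sumL_prod, <- sumL_scal. cbn [snd].
  apply sumL_ext. intros x' _.
  rewrite <- (sumL_ind Yl y (fun y' => s * z (x', y'))) by (auto; apply NY).
  apply sumL_ext. intros y' _. destruct (eqdec y' y); ring.
Qed.

Section Solution.
Variable z : V * V -> R.
Hypothesis Hz : forall c, In c plan_system -> dot (V * V) Pl (fst c) z <= snd c.

Lemma solution_nonneg p : In p Pl -> 0 <= z p.
Proof.
  intros Hp. pose proof (Hz (c_nonneg p) ltac:(apply in_plan_system; eauto)) as H.
  unfold c_nonneg, dot in H; cbn [fst snd] in H.
  rewrite (sumL_ext Pl _ (fun i => if eqdec i p then - z i else 0)), sumL_ind in H;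
    [lra | apply Pl_NoDup | auto | intros i _; destruct (eqdec i p); ring].
Qed.

Lemma solution_row x : In x X' -> sumL Yl (fun y => z (x, y)) = q x0 x.
Proof.
  intros Hx.
  pose proof (Hz (c_row 1 x) ltac:(apply in_plan_system; right; left; exists 1, x; auto)) as H1.
  pose proof (Hz (c_row (-1) x)
    ltac:(apply in_plan_system; right; left; exists (-1), x; auto)) as H2.
  rewrite dot_row in H1, H2 by (right; auto). cbn [snd c_row] in H1, H2. lra.
Qed.

Lemma solution_col y : In y Y' -> sumL Xl (fun x => z (x, y)) = q y0 y.
Proof.
  intros Hy.
  pose proof (Hz (c_col 1 y)
    ltac:(apply in_plan_system; right; right; left; exists 1, y; auto)) as H1.
  pose proof (Hz (c_col (-1) y)
    ltac:(apply in_plan_system; right; right; left; exists (-1), y; auto)) as H2.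
  rewrite dot_col in H1, H2 by (right; auto). cbn [snd c_col] in H1, H2. lra.
Qed.

Lemma solution_gain : 0 <= sumL Pl (fun p => z p * gain p).
Proof.
  pose proof (Hz c_gain ltac:(apply in_plan_system; auto)) as Hw.
  unfold c_gain, dot in Hw; cbn [fst snd] in Hw.
  rewrite (sumL_ext Pl _ (fun i => - (- gain i * z i))), sumL_opp; [lra | intros; ring].
Qed.
End Solution.

Definition restrict (z : V * V -> R) (p : V * V) : R :=
  if excluded_middle_informative (In p Pl) then z p else 0.

Lemma restrict_supp z p : restrict z p <> 0 -> In p Pl.
Proof. unfold restrict. destruct (excluded_middle_informative (In p Pl)); tauto. Qed.

Lemma restrict_in z p : In p Pl -> restrict z p = z p.
Proof. unfold restrict. destruct (excluded_middle_informative (In p Pl)); tauto. Qed.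

Lemma q_out_X x : x <> x0 -> ~ In x X' -> q x0 x = 0.
Proof.
  intros H0 H. destruct (Rle_lt_or_eq_dec _ _ (proj1 Hg x0 x)) as [Hp|Hp]; auto.
  destruct (CX x Hp); [congruence | contradiction].
Qed.

Lemma q_out_Y y : y <> y0 -> ~ In y Y' -> q y0 y = 0.
Proof.
  intros H0 H. destruct (Rle_lt_or_eq_dec _ _ (proj1 Hg y0 y)) as [Hp|Hp]; auto.
  destruct (CY y Hp); [congruence | contradiction].
Qed.

Lemma plan_of_solution (z : V * V -> R) :
  (forall c, In c plan_system -> dot (V * V) Pl (fst c) z <= snd c) ->
  exists rho, is_plan q x0 y0 rho /\ 0 <= cost q x0 y0 rho.
Proof.
  intros Hz. exists (restrict z). split; [split; [|split]|].
  - intros p. unfold restrict. destruct (excluded_middle_informative (In p Pl));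
      [apply solution_nonneg; auto | lra].
  - intros x Hx0. destruct (classic (In x X')) as [Hx|Hx].
    + rewrite <- (solution_row z Hz x Hx), (sumL_ext Yl _ (fun y => restrict z (x, y))).
      * apply sum_fin_list; [apply NY|]. intros y Hy.
        apply (restrict_supp z), in_prod_iff in Hy; tauto.
      * intros y Hy. symmetry; apply restrict_in, in_prod_iff; split; [right|]; auto.
    + rewrite q_out_X by auto. exists nil. split; [constructor | split; auto]. intros y Hy.
      apply (restrict_supp z), in_prod_iff in Hy. destruct Hy as [[H|H] _]; congruence.
  - intros y Hy0. destruct (classic (In y Y')) as [Hy|Hy].
    + rewrite <- (solution_col z Hz y Hy), (sumL_ext Xl _ (fun x => restrict z (x, y))).
      * apply sum_fin_list; [apply NX|]. intros x Hx.
        apply (restrict_supp z), in_prod_iff in Hx; tauto.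
      * intros x Hx. symmetry; apply restrict_in, in_prod_iff; split; [|right]; auto.
    + rewrite q_out_Y by auto. exists nil. split; [constructor | split; auto]. intros x Hx.
      apply (restrict_supp z), in_prod_iff in Hx. destruct Hx as [_ [H|H]]; congruence.
  - unfold cost. rewrite (fsum_list _ Pl Pl_NoDup).
    + rewrite (sumL_ext Pl _ (fun p => z p * gain p)); [exact (solution_gain z Hz)|].
      intros p Hp. rewrite restrict_in by auto. reflexivity.
    + intros p H. apply (restrict_supp z). intros E; apply H; rewrite E; ring.
Qed.
(* What every non-negative combination [(a, b)] of [plan_system] looks like: dual potentials
   [al], [be] and a multiplier [lam] of the gain constraint bound [a] from above. *)
Definition dual_bound (a : V * V -> R) (b : R) : Prop :=
  exists (al be : V -> R) (lam : R), 0 <= lam /\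
    (forall v, ~ In v X' -> al v = 0) /\ (forall v, ~ In v Y' -> be v = 0) /\
    (forall i, In i Pl -> a i <= al (fst i) + be (snd i) - lam * gain i) /\
    b = sumL X' (fun x => al x * q x0 x) + sumL Y' (fun y => be y * q y0 y).

Lemma sumL_upd (l : list V) (al : V -> R) x c (F : V -> R) : NoDup l -> In x l ->
  sumL l (fun v => (al v + (if eqdec v x then c else 0)) * F v) =
  sumL l (fun v => al v * F v) + c * F x.
Proof.
  intros N H. rewrite <- (sumL_ind l x (fun v => c * F v)), <- sumL_plus by auto.
  apply sumL_ext; intros v _; destruct (eqdec v x); ring.
Qed.

Lemma dual_bound_cone a b : cone (V * V) plan_system a b -> dual_bound a b.
Proof.
  assert (NX' : NoDup X') by (inversion NX; auto).
  assert (NY' : NoDup Y') by (inversion NY; auto).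
  apply cone_ind_prop.
  - exists (fun _ => 0), (fun _ => 0), 0. repeat split; auto; [lra | intros; lra |].
    rewrite (sumL_ext X' _ (fun _ => 0)), (sumL_ext Y' _ (fun _ => 0)), !sumL_zero
      by (intros; ring). ring.
  - intros a0 b0 c ab bb [al [be [lam [Hl [Ha [Hb [Hi Eb]]]]]]] Hin Hc0.
    apply in_plan_system in Hin.
    destruct Hin as [[p [E _]]|[[s [x [E [_ Hx]]]]|[[s [y [E [_ Hy]]]]|E]]];
      unfold c_nonneg, c_row, c_col, c_gain in E; injection E as E1 E2; subst ab bb.
    + exists al, be, lam. repeat split; auto; [|rewrite Eb; ring].
      intros i Hi'. specialize (Hi i Hi'). destruct (eqdec i p); nra.
    + exists (fun v => al v + (if eqdec v x then c * s else 0)), be, lam.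
      repeat split; auto.
      * intros v Hv. rewrite Ha by auto. destruct (eqdec v x); [subst; contradiction | ring].
      * intros i Hi'. specialize (Hi i Hi'). destruct (eqdec (fst i) x); lra.
      * rewrite sumL_upd, Eb by auto. ring.
    + exists al, (fun v => be v + (if eqdec v y then c * s else 0)), lam.
      repeat split; auto.
      * intros v Hv. rewrite Hb by auto. destruct (eqdec v y); [subst; contradiction | ring].
      * intros i Hi'. specialize (Hi i Hi'). destruct (eqdec (snd i) y); lra.
      * rewrite sumL_upd, Eb by auto. ring.
    + exists al, be, (lam + c). repeat split; auto; [lra | | rewrite Eb; ring].
      intros i Hi'. specialize (Hi i Hi'). lra.
Qed.

Hypothesis Hr : reversible q.
Hypothesis Hc : connected q.
Hypothesis Hk : nonneg_ollivier q.
Hypothesis Hne : x0 <> y0.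

(* Weak duality under non-negative curvature: potentials dominating the gain have
   non-negative total weight.  The witness is [f z = min_x (al x + d x z)]. *)
Lemma potentials_nonneg (al be : V -> R) :
  al x0 = 0 -> be y0 = 0 ->
  (forall x y, In x Xl -> In y Yl -> INR (d x0 y0) - INR (d x y) <= al x + be y) ->
  0 <= sumL X' (fun x => al x * q x0 x) + sumL Y' (fun y => be y * q y0 y).
Proof.
  intros Hal Hbe Hw. set (f := fun z => minL (fun x => al x + INR (d x z)) x0 X').
  assert (Hlip : lipschitz1 q f).
  { intros u v. unfold f. destruct (minL_att (fun x => al x + INR (d x v)) x0 X') as [x [Hx ->]].
    eapply Rle_trans; [apply (minL_le (fun x => al x + INR (d x u)) x0 X' x Hx)|].
    pose proof (gdist_tri q Hc x v u). rewrite (gdist_sym q Hg Hr Hc v u) in *. lra. }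
  assert (fX : forall x, In x Xl -> f x <= al x).
  { intros x Hx. eapply Rle_trans; [apply (minL_le (fun x' => al x' + INR (d x' x)) x0 X' x Hx)|].
    rewrite (gdist_refl q Hc); cbn; lra. }
  assert (fY : forall y, In y Yl -> INR (d x0 y0) - be y <= f y).
  { intros y Hy. apply minL_ge. intros x Hx. pose proof (Hw x y Hx Hy). lra. }
  assert (fx0 : f x0 = 0).
  { pose proof (fX x0 (or_introl eq_refl)). pose proof (fY y0 (or_introl eq_refl)).
    pose proof (Hlip y0 x0). rewrite (gdist_sym q Hg Hr Hc y0 x0) in *. lra. }
  assert (fy0 : f y0 = INR (d x0 y0)).
  { pose proof (fY y0 (or_introl eq_refl)). pose proof (Hlip y0 x0).
    rewrite (gdist_sym q Hg Hr Hc y0 x0) in *. lra. }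
  assert (L1 : lap q f x0 <= sumL X' (fun x => al x * q x0 x)).
  { rewrite (lap_list q Hg f x0 Xl NX) by (intros y Hy; destruct (CX y Hy); cbn; auto).
    unfold Xl. rewrite sumL_cons, fx0, Rminus_diag_eq, Rmult_0_r, Rplus_0_l by auto.
    apply sumL_le. intros x Hx. pose proof (fX x (or_intror Hx)). pose proof (proj1 Hg x0 x). nra. }
  assert (L2 : - sumL Y' (fun y => be y * q y0 y) <= lap q f y0).
  { rewrite (lap_list q Hg f y0 Yl NY) by (intros y Hy; destruct (CY y Hy); cbn; auto).
    unfold Yl. rewrite sumL_cons, Rminus_diag_eq, Rmult_0_r, Rplus_0_l, <- sumL_opp by auto.
    apply sumL_le. intros y Hy. pose proof (fY y (or_intror Hy)). pose proof (proj1 Hg y0 y). nra. }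
  pose proof (curvature_lap_mono q Hg Hr Hc Hk f x0 y0 Hne Hlip ltac:(lra)). lra.
Qed.

(* Farkas' certificates for [plan_system] contradict [potentials_nonneg]: scale the
   potentials by [1 / lam], or, if [lam = 0], they are non-negative. *)
Lemma no_certificate : ~ certificate (V * V) Pl plan_system.
Proof.
  intros [a [b [C [Ha0 Hb]]]].
  destruct (dual_bound_cone a b C) as [al [be [lam [Hl [Hal [Hbe [Hi Eb]]]]]]].
  assert (Hi0 : forall x y, In x Xl -> In y Yl -> lam * gain (x, y) <= al x + be y).
  { intros x y Hx Hy. pose proof (Hi (x, y) ltac:(apply in_prod_iff; auto)) as H.
    rewrite Ha0 in H by (apply in_prod_iff; auto). cbn in H. lra. }
  assert (al0 : al x0 = 0) by (apply Hal; inversion NX; auto).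
  assert (be0 : be y0 = 0) by (apply Hbe; inversion NY; auto).
  destruct (Rle_lt_or_eq_dec 0 lam Hl) as [Hlam|<-].
  - assert (0 <= b / lam); [|assert (b / lam < 0) by (apply Rdiv_neg_pos; auto); lra].
    rewrite Eb. unfold Rdiv. rewrite Rmult_plus_distr_r, !(Rmult_comm _ (/ lam)), <- !sumL_scal.
    rewrite (sumL_ext X' _ (fun x => (al x / lam) * q x0 x)) by (intros; unfold Rdiv; ring).
    rewrite (sumL_ext Y' _ (fun y => (be y / lam) * q y0 y)) by (intros; unfold Rdiv; ring).
    apply potentials_nonneg; [rewrite al0 | rewrite be0 | ]; unfold Rdiv; try ring.
    intros x y Hx Hy. apply Rmult_le_reg_r with lam; auto.
    replace ((al x * / lam + be y * / lam) * lam) with (al x + be y) by (field; lra).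
    pose proof (Hi0 x y Hx Hy). unfold gain in H; cbn in H. lra.
  - assert (0 <= b); [|lra]. rewrite Eb. apply Rplus_le_le_0_compat; apply sumL_nonneg.
    + intros x Hx. pose proof (Hi0 x y0 (or_intror Hx) (or_introl eq_refl)).
      pose proof (proj1 Hg x0 x). nra.
    + intros y Hy. pose proof (Hi0 x0 y (or_introl eq_refl) (or_intror Hy)).
      pose proof (proj1 Hg y0 y). nra.
Qed.

Lemma plan_exists_ne : exists rho, is_plan q x0 y0 rho /\ 0 <= cost q x0 y0 rho.
Proof.
  destruct (farkas (V * V) Pl Pl_NoDup plan_system) as [[z Hz]|C].
  - apply plan_of_solution with z. intros [ab bb]; apply Hz.
  - contradiction no_certificate.
Qed.
End TransportLP.

Lemma nbr_list {A} (x0 : A) (l : list A) : exists X', NoDup (x0 :: X') /\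
  (forall y, In y l -> y = x0 \/ In y X').
Proof.
  exists (filter (fun y => if eqdec y x0 then false else true) (nodup eqdec l)). split.
  - constructor; [|apply NoDup_filter, NoDup_nodup].
    intros H. apply filter_In in H as [_ H]. destruct (eqdec x0 x0); congruence.
  - intros y Hy. destruct (eqdec y x0); auto. right. apply filter_In.
    split; [apply nodup_In; auto|]. destruct (eqdec y x0); congruence.
Qed.

(* Staying put is a plan of cost zero from a vertex to itself. *)
Lemma diag_plan {V} (q : V -> V -> R) x : is_graph q -> connected q ->
  exists rho, is_plan q x x rho /\ cost q x x rho = 0.
Proof.
  intros Hg Hc.
  exists (fun p => if eqdec (fst p) (snd p)
                   then (if eqdec (fst p) x then 0 else q x (fst p)) else 0).
  split; [split; [|split]|].
  - intros p. destruct (eqdec (fst p) (snd p)); [|lra].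
    destruct (eqdec (fst p) x); [lra | apply Hg].
  - intros x' Hx'. exists (x' :: nil). split; [repeat constructor; auto|split].
    + intros y' H. cbn [fst snd] in H. destruct (eqdec x' y'); [left; auto | lra].
    + cbn [fst snd fold_right]. destruct (eqdec x' x'); [|congruence].
      destruct (eqdec x' x); [congruence | ring].
  - intros y' Hy'. exists (y' :: nil). split; [repeat constructor; auto|split].
    + intros x' H. cbn [fst snd] in H. destruct (eqdec x' y'); [left; auto | lra].
    + cbn [fst snd fold_right]. destruct (eqdec y' y'); [|congruence].
      destruct (eqdec y' x); [congruence | ring].
  - unfold cost. apply fsum_spec. exists nil. split; [constructor | split; [|reflexivity]].
    intros [u v] H. exfalso; apply H. cbn [fst snd].
    destruct (eqdec u v) as [<-|]; [rewrite !(gdist_refl q Hc); ring | ring].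
Qed.

Theorem nonneg_cost_plan {V} (q : V -> V -> R) :
  is_graph q -> reversible q -> connected q -> nonneg_ollivier q ->
  forall x y, exists rho, is_plan q x y rho /\ 0 <= cost q x y rho.
Proof.
  intros Hg Hr Hc Hk x y. destruct (eqdec x y) as [<-|Hne].
  - destruct (diag_plan q x Hg Hc) as [rho [Hp Hcost]]. exists rho. split; [auto | lra].
  - destruct (proj2 Hg x) as [lx Hlx], (nbr_list x lx) as [X' [NX CX]].
    destruct (proj2 Hg y) as [ly Hly], (nbr_list y ly) as [Y' [NY CY]].
    apply (plan_exists_ne V q Hg x y X' Y' NX NY); auto.
Qed.

Lemma mvt_between (g g' : R -> R) x y :
  (forall s, Rmin x y <= s <= Rmax x y -> derivable_pt_lim g s (g' s)) ->
  exists c, Rmin x y <= c <= Rmax x y /\ g y - g x = g' c * (y - x).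
Proof.
  intros H. destruct (Rtotal_order x y) as [Hxy|[<-|Hxy]].
  - rewrite Rmin_left, Rmax_right in * by lra.
    destruct (MVT_cor2 g g' x y Hxy H) as [c [E Hc]]. exists c. split; [lra | auto].
  - exists x. rewrite Rmin_left, Rmax_left by lra. split; [lra | ring].
  - rewrite Rmin_right, Rmax_left in * by lra.
    destruct (MVT_cor2 g g' y x Hxy H) as [c [E Hc]]. exists c. split; [lra | lra].
Qed.

Lemma mvt_bound (g g' : R -> R) x y M :
  (forall s, Rmin x y <= s <= Rmax x y -> derivable_pt_lim g s (g' s)) ->
  (forall s, Rmin x y <= s <= Rmax x y -> Rabs (g' s) <= M) ->
  Rabs (g y - g x) <= M * Rabs (y - x).
Proof.
  intros H1 H2. destruct (mvt_between g g' x y H1) as [c [Hc ->]].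
  rewrite Rabs_mult. apply Rmult_le_compat_r; [apply Rabs_pos | auto].
Qed.

Lemma mvt_nonincr (g g' : R -> R) x y : x <= y ->
  (forall s, x <= s <= y -> derivable_pt_lim g s (g' s)) ->
  (forall s, x <= s <= y -> g' s <= 0) -> g y <= g x.
Proof.
  intros Hxy H1 H2. destruct (mvt_between g g' x y) as [c [Hc E]];
    rewrite ?Rmin_left, ?Rmax_right in * by auto; auto.
  specialize (H2 c Hc). nra.
Qed.

Lemma deriv0_const (g : R -> R) : (forall s, derivable_pt_lim g s 0) -> forall x y, g x = g y.
Proof. intros H x y. destruct (mvt_between g (fun _ => 0) y x) as [c [_ E]]; auto. lra. Qed.

Lemma dpl_ext (f g : R -> R) t l :
  (forall s, f s = g s) -> derivable_pt_lim g t l -> derivable_pt_lim f t l.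
Proof. intros H D. replace f with g; auto. apply functional_extensionality; auto. Qed.

Lemma dpl_cst (c t : R) : derivable_pt_lim (fun _ => c) t 0.
Proof. apply (derivable_pt_lim_const c t). Qed.

Lemma dpl_lin (t c x : R) : derivable_pt_lim (fun s => (s - t) * c) x c.
Proof.
  intros eps He. exists (mkposreal eps He). intros h Hh _.
  replace (((x + h - t) * c - (x - t) * c) / h - c) with 0 by (field; auto).
  rewrite Rabs_R0; auto.
Qed.

Lemma dpl_sumL {A} (l : list A) (F : R -> A -> R) (F' : A -> R) t :
  (forall k, In k l -> derivable_pt_lim (fun s => F s k) t (F' k)) ->
  derivable_pt_lim (fun s => sumL l (F s)) t (sumL l F').
Proof.
  induction l as [|a l IH]; intros H; [apply derivable_pt_lim_const|].
  apply (derivable_pt_lim_plus (fun s => F s a) (fun s => sumL l (F s)));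
    [apply H; left | apply IH; intros; apply H; right]; auto.
Qed.

Lemma derivable_of_quadratic_error (f : R -> R) t l C delta : 0 < delta -> 0 <= C ->
  (forall h, Rabs h < delta -> Rabs (f (t + h) - f t - h * l) <= C * (h * h)) ->
  derivable_pt_lim f t l.
Proof.
  intros Hd HC H eps He.
  assert (Hm : 0 < Rmin delta (eps / (C + 1)))
    by (apply Rmin_pos; [lra | apply Rdiv_lt_0_compat; lra]).
  exists (mkposreal _ Hm). intros h Hh Hlt. cbn in Hlt.
  assert (H1 : Rabs h < delta) by (eapply Rlt_le_trans; [exact Hlt | apply Rmin_l]).
  assert (H2 : Rabs h < eps / (C + 1)) by (eapply Rlt_le_trans; [exact Hlt | apply Rmin_r]).
  specialize (H h H1). assert (Hh' : 0 < Rabs h) by (apply Rabs_pos_lt; auto).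
  replace ((f (t + h) - f t) / h - l) with ((f (t + h) - f t - h * l) / h) by (field; auto).
  unfold Rdiv. rewrite Rabs_mult, Rabs_inv.
  rewrite <- (Rabs_pos_eq (h * h)), Rabs_mult in H by nra.
  apply Rle_lt_trans with (C * Rabs h).
  - apply Rmult_le_reg_r with (Rabs h); auto. rewrite Rmult_assoc, Rinv_l, Rmult_1_r by lra. nra.
  - apply Rmult_lt_compat_r with (r := C + 1) in H2; [|lra].
    replace (eps / (C + 1) * (C + 1)) with eps in H2 by (field; lra). nra.
Qed.

Definition negsq (x : R) : R := Rmin x 0 * Rmin x 0.

Lemma negsq_deriv x : derivable_pt_lim negsq x (2 * Rmin x 0).
Proof.
  apply (derivable_of_quadratic_error negsq x _ 1 1); try lra. intros h _. unfold negsq.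
  unfold Rmin; destruct (Rle_dec (x + h) 0); destruct (Rle_dec x 0); apply Rabs_le; split; nra.
Qed.

(** The weak maximum principle for the heat equation on [{1..N}] with rate [a]. *)

(* The second difference, i.e. the Laplacian of the unit-rate path graph on [N_0]. *)
Definition diff2 (v : nat -> R) (k : nat) : R := v (S k) + v (k - 1)%nat - 2 * v k.

(* Summation by parts for the discrete Laplacian with a zero left boundary value. *)
Lemma dirichlet_form (M : nat -> R) n : M 0%nat = 0 ->
  sumL (seq 1 n) (fun k => M k * (M (S k) + M (k - 1)%nat - 2 * M k))
  <= M n * M (S n) - M n * M n.
Proof.
  intros H0. induction n as [|n IH]; [cbn; rewrite H0; lra|].
  rewrite seq_S, sumL_app. replace (1 + n)%nat with (S n) by lia. rewrite sumL_cons.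
  cbn [sumL fold_right]. replace (S n - 1)%nat with n by lia.
  pose proof (pow2_ge_0 (M n - M (S n))). nra.
Qed.

Lemma neg_part_dissipation (v : nat -> R) N : 0 <= v 0%nat -> 0 <= v (S N) ->
  sumL (seq 1 N) (fun j => Rmin (v j) 0 * diff2 v j) <= 0.
Proof.
  intros H0 HN.
  set (M := fun j => if (j =? 0)%nat then 0 else if (j =? S N)%nat then 0 else Rmin (v j) 0).
  assert (Mle : forall j, M j <= v j).
  { intros j. unfold M. destruct (j =? 0)%nat eqn:E0; [apply Nat.eqb_eq in E0; subst; auto|].
    destruct (j =? S N)%nat eqn:E1; [apply Nat.eqb_eq in E1; subst; auto | apply Rmin_l]. }
  assert (Min : forall j, (1 <= j <= N)%nat -> M j = Rmin (v j) 0).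
  { intros j Hj. unfold M. destruct (j =? 0)%nat eqn:E0; [apply Nat.eqb_eq in E0; lia|].
    destruct (j =? S N)%nat eqn:E1; [apply Nat.eqb_eq in E1; lia | auto]. }
  assert (MN : M (S N) = 0) by (unfold M; rewrite Nat.eqb_refl; destruct (S N =? 0)%nat; auto).
  pose proof (dirichlet_form M N eq_refl) as D. rewrite MN in D.
  pose proof (Rle_0_sqr (M N)). unfold Rsqr in *.
  apply Rle_trans with (sumL (seq 1 N) (fun k => M k * (M (S k) + M (k - 1)%nat - 2 * M k)));
    [apply sumL_le | lra]. unfold diff2. intros j Hj. apply in_seq in Hj. rewrite Min by lia.
  pose proof (Mle (S j)). pose proof (Mle (j - 1)%nat). pose proof (Rmin_r (v j) 0).
  assert (Rmin (v j) 0 * v j = Rmin (v j) 0 * Rmin (v j) 0)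
    by (unfold Rmin; destruct (Rle_dec (v j) 0); lra).
  set (r := Rmin (v j) 0) in *.
  assert (r * v (S j) <= r * M (S j)) by nra.
  assert (r * v (j - 1)%nat <= r * M (j - 1)%nat) by nra.
  lra.
Qed.

Section MaxPrinciple.
Variable a : R.
Hypothesis Ha : 0 <= a.

(* A solution of [d/dt w = a diff2 w] on [{1..N}], non-negative at time 0 and on the
   boundary [{0, N + 1}], stays non-negative: the energy [sum_j min(w_j, 0)^2]
   vanishes at time 0 and does not increase. *)
Lemma max_principle (N : nat) (w : R -> nat -> R) :
  (forall t, 0 <= t -> 0 <= w t 0%nat /\ 0 <= w t (S N)) ->
  (forall t k, (1 <= k <= N)%nat -> derivable_pt_lim (fun s => w s k) t (a * diff2 (w t) k)) ->
  (forall k, (1 <= k <= N)%nat -> 0 <= w 0 k) ->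
  forall t k, 0 <= t -> (1 <= k <= N)%nat -> 0 <= w t k.
Proof.
  intros Hb Hd Hi t k Ht Hk.
  set (E := fun s => sumL (seq 1 N) (fun j => negsq (w s j))).
  set (E' := fun s => 2 * a * sumL (seq 1 N) (fun j => Rmin (w s j) 0 * diff2 (w s) j)).
  assert (Hder : forall s, derivable_pt_lim E s (E' s)).
  { intros s. unfold E'. rewrite <- sumL_scal.
    rewrite (sumL_ext _ _ (fun j => 2 * Rmin (w s j) 0 * (a * diff2 (w s) j))) by (intros; ring).
    apply (dpl_sumL (seq 1 N) (fun s j => negsq (w s j))). intros j Hj. apply in_seq in Hj.
    apply (derivable_pt_lim_comp (fun s => w s j) negsq); [apply Hd; lia | apply negsq_deriv]. }
  assert (HE0 : E 0 = 0).
  { unfold E. rewrite (sumL_ext _ _ (fun _ => 0)); [apply sumL_zero|].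
    intros j Hj. apply in_seq in Hj. unfold negsq. rewrite Rmin_right; [ring | apply Hi; lia]. }
  assert (HEt : E t <= 0).
  { rewrite <- HE0. apply mvt_nonincr with E'; auto. intros s Hs. unfold E'.
    destruct (Hb s ltac:(lra)). pose proof (neg_part_dissipation (w s) N ltac:(lra) ltac:(lra)).
    nra. }
  assert (Hz : negsq (w t k) = 0).
  { apply (sumL_nonneg_zero (seq 1 N) (fun j => negsq (w t j)));
      [intros; unfold negsq; nra | | apply in_seq; lia].
    apply Rle_antisym; auto. apply sumL_nonneg. intros; unfold negsq; nra. }
  unfold negsq, Rmin in Hz. destruct (Rle_dec (w t k) 0); nra.
Qed.
End MaxPrinciple.

(** The Dirichlet problem on [{0..N}] for the graph on [N_0] with rates [q0 a]. *)

Lemma sum_f_R0_last (g : nat -> R) m :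
  (forall j, (j < m)%nat -> g j = 0) -> sum_f_R0 g m = g m.
Proof.
  induction m as [|m IH]; intros H; cbn; auto.
  rewrite IH, H by (auto; intros; apply H; lia). ring.
Qed.

(* The Laplacian of [q0 a] is [a diff2] away from the absorbing vertex [0]. *)
Lemma lapN_eq a u k :
  lapN a u k = match k with O => 0 | S _ => a * diff2 u k end.
Proof.
  unfold lapN, diff2. destruct k as [|m]; [cbn; unfold q0; cbn; ring|].
  cbn [sum_f_R0]. rewrite sum_f_R0_last.
  - replace (S m - 1)%nat with m by lia.
    assert (E1 : q0 a (S m) m = a) by (unfold q0; cbn; rewrite Nat.eqb_refl; auto).
    assert (E2 : q0 a (S m) (S (S m)) = a)
      by (unfold q0; cbn; rewrite Nat.eqb_refl; destruct (m =? S (S m))%nat; auto).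
    rewrite E1, E2. ring.
  - intros j Hj. unfold q0. cbn.
    destruct (m =? j)%nat eqn:E; [apply Nat.eqb_eq in E; lia|].
    destruct (j =? S (S m))%nat eqn:E'; [apply Nat.eqb_eq in E'; lia | cbn; ring].
Qed.

(* Solutions of the Dirichlet problem with initial datum [1_{N_+}], with the boundary
   value at [0] made explicit. *)
Record dir_sol (a : R) (N : nat) (U : R -> nat -> R) : Prop := {
  sol_out : forall t k, (N < k)%nat -> U t k = 0;
  sol_zero : forall t, U t 0%nat = 0;
  sol_init : forall k, (k <= N)%nat -> U 0 k = ind_pos k;
  sol_deriv : forall t k, (1 <= k <= N)%nat ->
    derivable_pt_lim (fun s => U s k) t (a * diff2 (U t) k) }.

Lemma dir_sol_of_dirichlet a N U : dirichlet_sol a N ind_pos U -> dir_sol a N U.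
Proof.
  intros [H1 [H2 H3]]. split; auto.
  - intros t. rewrite (deriv0_const (fun s => U s 0%nat)) with (y := 0).
    + rewrite H2 by lia. reflexivity.
    + intros s. pose proof (H3 s 0%nat ltac:(lia)) as D. rewrite lapN_eq in D. auto.
  - intros t k Hk. pose proof (H3 t k ltac:(lia)) as D. rewrite lapN_eq in D.
    destruct k; [lia | auto].
Qed.

Lemma dirichlet_of_dir_sol a N U : dir_sol a N U -> dirichlet_sol a N ind_pos U.
Proof.
  intros HU. split; [apply (sol_out _ _ _ HU) | split; [apply (sol_init _ _ _ HU)|]].
  intros t k Hk. rewrite lapN_eq. destruct k as [|k].
  - apply (dpl_ext _ (fun _ => 0)); [apply (sol_zero _ _ _ HU) | apply dpl_cst].
  - apply (sol_deriv _ _ _ HU); lia.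
Qed.

(* Existence by the exponential series [U t = sum_m t^m A^m init_datum / m!] of the
   (bounded) Dirichlet generator [A].  Coquelicot's power series are used only
   here, so they are imported locally. *)
Module PowerSeriesSolution.
Import Coquelicot.Coquelicot.

Section Series.
Variable a : R.
Hypothesis Ha : 0 <= a.

Definition Aop (N : nat) (g : nat -> R) (k : nat) : R :=
  if andb (1 <=? k)%nat (k <=? N)%nat then a * diff2 g k else 0.
Definition init_datum (N : nat) (k : nat) : R := if (k <=? N)%nat then ind_pos k else 0.
Definition Aiter (N m : nat) : nat -> R := Nat.iter m (Aop N) (init_datum N).
Definition coef (N k m : nat) : R := Aiter N m k / INR (fact m).
Definition Usol (N : nat) (t : R) (k : nat) : R := PSeries (coef N k) t.

Lemma Aiter_out N m k : (N < k)%nat -> Aiter N m k = 0.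
Proof.
  intros H. destruct m; cbn; [unfold init_datum | unfold Aop];
    replace (k <=? N)%nat with false by (symmetry; apply Nat.leb_gt; auto);
    rewrite ?Bool.andb_false_r; auto.
Qed.

Lemma Aiter_0 N m : Aiter N m 0%nat = 0.
Proof. destruct m; cbn; [unfold init_datum; destruct (0 <=? N)%nat | unfold Aop]; auto. Qed.

Lemma Aiter_bound N m k : Rabs (Aiter N m k) <= (4 * a) ^ m.
Proof.
  revert k. induction m as [|m IH]; intros k.
  - change (Aiter N 0 k) with (init_datum N k). unfold init_datum, ind_pos. cbn [pow].
    destruct (k <=? N)%nat; destruct (0 <? k)%nat;
      rewrite ?Rabs_R1, ?Rabs_R0; lra.
  - change (Aiter N (S m) k) with (Aop N (Aiter N m) k). cbn [pow]. unfold Aop, diff2.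
    destruct (andb (1 <=? k)%nat (k <=? N)%nat).
    + rewrite Rabs_mult, (Rabs_right a) by lra.
      pose proof (IH (S k)); pose proof (IH (k - 1)%nat); pose proof (IH k).
      assert (Rabs (Aiter N m (S k) + Aiter N m (k - 1)%nat - 2 * Aiter N m k) <= 4 * (4 * a) ^ m).
      { eapply Rle_trans; [apply Rabs_triang|]. eapply Rle_trans.
        { apply Rplus_le_compat_r, Rabs_triang. }
        rewrite Rabs_Ropp, Rabs_mult, (Rabs_right 2) by lra. lra. }
      replace (4 * a * (4 * a) ^ m) with (a * (4 * (4 * a) ^ m)) by ring.
      apply Rmult_le_compat_l; lra.
    + rewrite Rabs_R0. apply Rmult_le_pos; [lra | apply pow_le; lra].
Qed.

(* The coefficients are dominated by those of [exp (4 a |r|)]: infinite radius. *)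
Lemma coef_disk N k r : CV_disk (coef N k) r.
Proof.
  assert (Hexp : ex_series (fun n => (4 * a * Rabs r) ^ n / INR (fact n))).
  { exists (exp (4 * a * Rabs r)). eapply is_series_ext; [|exact (is_exp_Reals (4 * a * Rabs r))].
    intros n. cbn. rewrite pow_n_pow. unfold scal; cbn. unfold mult; cbn. unfold Rdiv. ring. }
  apply (@ex_series_le R_AbsRing R_CompleteNormedModule _
    (fun n => (4 * a * Rabs r) ^ n / INR (fact n))); [|exact Hexp].
  intros n. unfold norm; cbn. unfold abs; cbn.
  rewrite Rabs_Rabsolu. unfold coef, Rdiv. rewrite !Rabs_mult, <- RPow_abs.
  assert (0 < / INR (fact n)) by apply Rinv_0_lt_compat, INR_fact_lt_0.
  rewrite (Rabs_right (/ INR (fact n))), Rpow_mult_distr by lra.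
  pose proof (Aiter_bound N n k). pose proof (pow_le (Rabs r) n (Rabs_pos r)).
  replace ((4 * a) ^ n * Rabs r ^ n * / INR (fact n))
    with ((4 * a) ^ n * (/ INR (fact n) * Rabs r ^ n)) by ring.
  rewrite Rmult_assoc. apply Rmult_le_compat_r; auto. apply Rmult_le_pos; lra.
Qed.

Lemma coef_radius N k t : Rbar_lt (Rabs t) (CV_radius (coef N k)).
Proof.
  apply Rbar_lt_le_trans with (Rabs t + 1); [cbn; lra|].
  unfold CV_radius. destruct (Lub_Rbar_correct (CV_disk (coef N k))) as [H _].
  apply H, coef_disk.
Qed.

Lemma PSeries_zero (c : nat -> R) t : (forall n, c n = 0) -> PSeries c t = 0.
Proof. intros H. rewrite (PSeries_ext _ (fun _ => 0)) by auto. apply PSeries_const_0. Qed.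

Lemma PSeries_lin (c1 c2 c3 : nat -> R) t :
  ex_pseries c1 t -> ex_pseries c2 t -> ex_pseries c3 t ->
  PSeries (fun n => a * (c1 n + c2 n - 2 * c3 n)) t =
  a * (PSeries c1 t + PSeries c2 t - 2 * PSeries c3 t).
Proof.
  intros E1 E2 E3. apply is_pseries_unique. apply PSeries_correct in E1, E2, E3.
  pose proof (is_pseries_scal (-2) c3 t _ (Rmult_comm _ _) E3) as F3.
  pose proof (is_pseries_plus _ _ t _ _ (is_pseries_plus _ _ t _ _ E1 E2) F3) as F.
  pose proof (is_pseries_scal a _ t _ (Rmult_comm _ _) F) as G.
  eapply is_pseries_ext in G.
  - replace (a * (PSeries c1 t + PSeries c2 t - 2 * PSeries c3 t)) with
      (scal a (plus (plus (PSeries c1 t) (PSeries c2 t)) (scal (-2) (PSeries c3 t)))); [exact G|].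
    unfold scal, plus; cbn. unfold mult, plus; cbn. ring.
  - intros n. unfold PS_scal, PS_plus, scal, plus; cbn. unfold mult, plus; cbn. ring.
Qed.

Theorem Usol_sol N : dir_sol a N (Usol N).
Proof.
  split.
  - intros t k Hk. apply PSeries_zero. intros n. unfold coef. rewrite Aiter_out by auto.
    unfold Rdiv; ring.
  - intros t. apply PSeries_zero. intros n. unfold coef. rewrite Aiter_0. unfold Rdiv; ring.
  - intros k Hk. unfold Usol. rewrite PSeries_0. unfold coef.
    change (Aiter N 0 k) with (init_datum N k). unfold init_datum.
    replace (k <=? N)%nat with true by (symmetry; apply Nat.leb_le; auto). cbn. field.
  - intros t k Hk. unfold Usol, diff2. apply is_derive_Reals.
    rewrite <- PSeries_lin by (apply CV_radius_inside, coef_radius).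
    rewrite <- (PSeries_ext (PS_derive (coef N k))).
    + apply is_derive_PSeries, coef_radius.
    + intros n. unfold PS_derive, coef. change (Aiter N (S n) k) with (Aop N (Aiter N n) k).
      unfold Aop, diff2. replace (andb (1 <=? k)%nat (k <=? N)%nat) with true
        by (symmetry; apply andb_true_intro; split; apply Nat.leb_le; lia).
      rewrite fact_simpl, mult_INR, S_INR. pose proof (INR_fact_lt_0 n). pose proof (pos_INR n).
      field. split; lra.
Qed.
End Series.
End PowerSeriesSolution.

Import PowerSeriesSolution.

(** Properties of the Dirichlet solutions, all derived from the maximum principle. *)

Section DirichletSolution.
Variable a : R.
Hypothesis Ha : 0 <= a.

Lemma ind_pos_01 k : 0 <= ind_pos k <= 1.
Proof. unfold ind_pos. destruct (0 <? k)%nat; lra. Qed.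

(* Comparison: enlarging the domain increases the solution; in particular the
   solution of each Dirichlet problem is unique. *)
Lemma sol_nonneg N U : dir_sol a N U -> forall t k, 0 <= t -> 0 <= U t k.
Proof.
  intros HU t k Ht. destruct k as [|k]; [rewrite (sol_zero _ _ _ HU); lra|].
  destruct (Nat.le_gt_cases (S k) N); [|rewrite (sol_out _ _ _ HU) by lia; lra].
  apply (max_principle a Ha N U); auto; try lia.
  - intros s _. rewrite (sol_zero _ _ _ HU), (sol_out _ _ _ HU) by lia. lra.
  - apply (sol_deriv _ _ _ HU).
  - intros j Hj. rewrite (sol_init _ _ _ HU) by lia. apply ind_pos_01.
Qed.

Lemma sol_compare N N' U U' : (N <= N')%nat -> dir_sol a N U -> dir_sol a N' U' ->
  forall t k, 0 <= t -> U t k <= U' t k.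
Proof.
  intros HN HU HU' t k Ht. destruct k as [|k].
  { rewrite (sol_zero _ _ _ HU), (sol_zero _ _ _ HU'); lra. }
  destruct (Nat.le_gt_cases (S k) N).
  - assert (0 <= U' t (S k) - U t (S k)); [|lra].
    apply (max_principle a Ha N (fun s j => U' s j - U s j)); auto; try lia.
    + intros s Hs. rewrite (sol_zero _ _ _ HU), (sol_zero _ _ _ HU'), (sol_out _ _ _ HU) by lia.
      pose proof (sol_nonneg N' U' HU' s (S N) Hs). lra.
    + intros s j Hj. unfold diff2.
      replace (a * (U' s (S j) - U s (S j) + (U' s (j - 1)%nat - U s (j - 1)%nat)
                    - 2 * (U' s j - U s j)))
        with (a * diff2 (U' s) j - a * diff2 (U s) j) by (unfold diff2; ring).
      apply (derivable_pt_lim_minus (fun s => U' s j) (fun s => U s j));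
        [apply (sol_deriv _ _ _ HU') | apply (sol_deriv _ _ _ HU)]; lia.
    + intros j Hj. rewrite (sol_init _ _ _ HU), (sol_init _ _ _ HU') by lia. lra.
  - rewrite (sol_out _ _ _ HU) by lia. apply (sol_nonneg N' U' HU'); auto.
Qed.

Section OneSolution.
Variable N : nat.
Variable U : R -> nat -> R.
Hypothesis HU : dir_sol a N U.

(* Solutions stay below [1], by the maximum principle applied to [1 - U]. *)
Lemma sol_le1 t k : 0 <= t -> U t k <= 1.
Proof.
  intros Ht. destruct k as [|k]; [rewrite (sol_zero _ _ _ HU); lra|].
  destruct (Nat.le_gt_cases (S k) N); [|rewrite (sol_out _ _ _ HU) by lia; lra].
  assert (0 <= 1 - U t (S k)); [|lra].
  apply (max_principle a Ha N (fun s j => 1 - U s j)); auto; try lia.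
  - intros s _. rewrite (sol_zero _ _ _ HU), (sol_out _ _ _ HU) by lia. lra.
  - intros s j Hj. unfold diff2.
    replace (a * (1 - U s (S j) + (1 - U s (j - 1)%nat) - 2 * (1 - U s j)))
      with (0 - a * diff2 (U s) j) by (unfold diff2; ring).
    apply (derivable_pt_lim_minus (fun _ => 1) (fun s => U s j));
      [apply dpl_cst | apply (sol_deriv _ _ _ HU); auto].
  - intros j Hj. rewrite (sol_init _ _ _ HU) by lia. pose proof (ind_pos_01 j). lra.
Qed.

(* The Dirichlet second difference: [diff2] inside [{1..N}], zero outside.  It is
   the time derivative of [U] divided by [a] at every vertex. *)
Definition dlap (s : R) (j : nat) : R :=
  if andb (1 <=? j)%nat (j <=? N)%nat then diff2 (U s) j else 0.

Lemma dlap_in s j : (1 <= j <= N)%nat -> dlap s j = diff2 (U s) j.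
Proof.
  intros H. unfold dlap. replace (andb (1 <=? j)%nat (j <=? N)%nat) with true; auto.
  symmetry; apply andb_true_intro; split; apply Nat.leb_le; lia.
Qed.

Lemma dlap_out s j : ~ (1 <= j <= N)%nat -> dlap s j = 0.
Proof.
  intros H. unfold dlap. destruct (1 <=? j)%nat eqn:E1; destruct (j <=? N)%nat eqn:E2; auto.
  apply Nat.leb_le in E1, E2. lia.
Qed.

Lemma sol_deriv_all t i : derivable_pt_lim (fun s => U s i) t (a * dlap t i).
Proof.
  destruct (classic (1 <= i <= N)%nat) as [H|H].
  - rewrite dlap_in by auto. apply (sol_deriv _ _ _ HU); auto.
  - rewrite dlap_out, Rmult_0_r by auto. apply (dpl_ext _ (fun _ => 0)); [|apply dpl_cst].
    intros s. destruct i; [apply (sol_zero _ _ _ HU) | apply (sol_out _ _ _ HU); lia].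
Qed.

Lemma dlap_deriv t j : (1 <= j <= N)%nat ->
  derivable_pt_lim (fun s => dlap s j) t (a * diff2 (dlap t) j).
Proof.
  intros H. apply (dpl_ext _ (fun s => U s (S j) + U s (j - 1)%nat - 2 * U s j));
    [intros; rewrite dlap_in; auto|].
  replace (a * diff2 (dlap t) j)
    with (a * dlap t (S j) + a * dlap t (j - 1)%nat - 2 * (a * dlap t j)) by (unfold diff2; ring).
  apply (derivable_pt_lim_minus (fun s => U s (S j) + U s (j - 1)%nat) (fun s => 2 * U s j)).
  - apply (derivable_pt_lim_plus (fun s => U s (S j)) (fun s => U s (j - 1)%nat));
      apply sol_deriv_all.
  - apply (derivable_pt_lim_scal (fun s => U s j)), sol_deriv_all.
Qed.

(* [U t] is concave: [dlap] starts [<= 0] (the initial datum is concave on [{1..N}])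
   and vanishes on the boundary, so the maximum principle applies to [- dlap]. *)
Lemma dlap_nonpos t j : 0 <= t -> dlap t j <= 0.
Proof.
  intros Ht. destruct (classic (1 <= j <= N)%nat) as [H|H]; [|rewrite dlap_out; auto; lra].
  assert (0 <= - dlap t j); [|lra].
  apply (max_principle a Ha N (fun s j => - dlap s j)); auto.
  - intros s _. rewrite !dlap_out by lia. lra.
  - intros s i Hi. replace (a * diff2 (fun j => - dlap s j) i) with (- (a * diff2 (dlap s) i))
      by (unfold diff2; ring).
    apply (derivable_pt_lim_opp (fun s => dlap s i)), dlap_deriv; auto.
  - intros i Hi. rewrite dlap_in by auto. unfold diff2.
    rewrite (sol_init _ _ _ HU i), (sol_init _ _ _ HU (i - 1)) by lia.
    pose proof (sol_le1 0 (S i) ltac:(lra)).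
    assert (ind_pos i = 1) by (unfold ind_pos; replace (0 <? i)%nat with true;
      auto; symmetry; apply Nat.ltb_lt; lia).
    pose proof (ind_pos_01 (i - 1)). lra.
Qed.

(* [|dlap| <= 4] since [0 <= U <= 1], so [dlap] is [16 a]-Lipschitz in time. *)
Lemma dlap_bound t j : 0 <= t -> Rabs (dlap t j) <= 4.
Proof.
  intros Ht. destruct (classic (1 <= j <= N)%nat) as [H|H];
    [|rewrite dlap_out, Rabs_R0 by auto; lra].
  rewrite dlap_in by auto. unfold diff2.
  pose proof (sol_nonneg N U HU t (S j) Ht). pose proof (sol_nonneg N U HU t (j - 1) Ht).
  pose proof (sol_nonneg N U HU t j Ht). pose proof (sol_le1 t (S j) Ht).
  pose proof (sol_le1 t (j - 1) Ht). pose proof (sol_le1 t j Ht). apply Rabs_le; lra.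
Qed.

Lemma dlap_lipschitz t s n : 0 <= t -> 0 <= s -> (1 <= n <= N)%nat ->
  Rabs (dlap s n - dlap t n) <= 16 * a * Rabs (s - t).
Proof.
  intros Ht Hs Hn.
  apply (mvt_bound (fun s => dlap s n) (fun s => a * diff2 (dlap s) n));
    [intros; apply dlap_deriv; auto|].
  intros s' Hs'. assert (0 <= s') by (unfold Rmin in Hs'; destruct (Rle_dec t s); lra).
  rewrite Rabs_mult, (Rabs_right a) by lra. unfold diff2.
  pose proof (dlap_bound s' (S n) H). pose proof (dlap_bound s' (n - 1) H).
  pose proof (dlap_bound s' n H).
  assert (Rabs (dlap s' (S n) + dlap s' (n - 1)%nat - 2 * dlap s' n) <= 16).
  { eapply Rle_trans; [apply Rabs_triang|].
    eapply Rle_trans; [apply Rplus_le_compat_r, Rabs_triang|].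
    rewrite Rabs_Ropp, Rabs_mult, (Rabs_right 2) by lra. lra. }
  nra.
Qed.

(* Second-order Taylor bound, uniform in [N]. *)
Lemma sol_taylor t h n : 0 <= t -> 0 <= t + h -> (1 <= n <= N)%nat ->
  Rabs (U (t + h) n - U t n - h * (a * dlap t n)) <= 16 * a * a * (h * h).
Proof.
  intros Ht Hth Hn.
  set (g := fun s => U s n - (s - t) * (a * dlap t n)).
  assert (B : Rabs (g (t + h) - g t) <= (16 * a * a * Rabs h) * Rabs (t + h - t)).
  { apply mvt_bound with (g' := fun s => a * dlap s n - a * dlap t n).
    - intros s Hs.
      apply (derivable_pt_lim_minus (fun s => U s n) (fun s => (s - t) * (a * dlap t n)));
        [apply sol_deriv_all | apply dpl_lin].
    - intros s Hs. assert (0 <= s) by (unfold Rmin in Hs; destruct (Rle_dec t (t + h)); lra).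
      replace (a * dlap s n - a * dlap t n) with (a * (dlap s n - dlap t n)) by ring.
      rewrite Rabs_mult, (Rabs_right a) by lra.
      pose proof (dlap_lipschitz t s n Ht H Hn).
      assert (Rabs (s - t) <= Rabs h).
      { unfold Rmin, Rmax in Hs. destruct (Rle_dec t (t + h)); unfold Rabs;
          destruct (Rcase_abs (s - t)); destruct (Rcase_abs h); lra. }
      pose proof (Rabs_pos (s - t)). pose proof (Rabs_pos (dlap s n - dlap t n)). nra. }
  unfold g in B. replace (t + h - t) with h in B by ring.
  replace (U (t + h) n - h * (a * dlap t n) - (U t n - (t - t) * (a * dlap t n)))
    with (U (t + h) n - U t n - h * (a * dlap t n)) in B by ring.
  rewrite <- (Rabs_pos_eq (h * h)), Rabs_mult by nra. lra.
Qed.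
End OneSolution.
End DirichletSolution.

(** [phi] is the monotone limit of the Dirichlet solutions; it inherits their
    bounds, concavity and Taylor estimate, and is therefore differentiable in time. *)

Lemma lim_le (x : nat -> R) l B N0 :
  Un_cv x l -> (forall N, (N0 <= N)%nat -> x N <= B) -> l <= B.
Proof.
  intros H Hb. destruct (Rle_dec l B) as [|n]; auto. exfalso.
  destruct (H (l - B)) as [N HN]; [lra|].
  specialize (HN (max N N0) ltac:(lia)). specialize (Hb (max N N0) ltac:(lia)).
  unfold R_dist in HN. apply Rabs_def2 in HN. lra.
Qed.

Lemma lim_ge (x : nat -> R) l B N0 :
  Un_cv x l -> (forall N, (N0 <= N)%nat -> B <= x N) -> B <= l.
Proof.
  intros H Hb. apply Ropp_le_cancel, (lim_le (fun N => - x N) _ _ N0); [apply CV_opp; auto|].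
  intros N HN. apply Ropp_le_contravar; auto.
Qed.

Lemma cv_scal (x : nat -> R) l c : Un_cv x l -> Un_cv (fun N => c * x N) (c * l).
Proof.
  intros H. apply (CV_mult (fun _ => c) x); auto.
  intros eps He. exists 0%nat. intros. unfold R_dist. rewrite Rminus_diag_eq, Rabs_R0; auto.
Qed.

Section Phi.
Variable a : R.
Hypothesis Ha : 0 <= a.

(* [phi t n] is the limit of [Usol N t n]: the solutions increase with [N], are
   bounded by [1], and every Dirichlet solution equals [Usol N]. *)
Lemma phi_lim t n : 0 <= t -> Un_cv (fun N => Usol a N t n) (phi a t n).
Proof.
  intros Ht.
  destruct (growing_cv (fun N => Usol a N t n)) as [l Hl].
  - intros N. apply (sol_compare a Ha N (S N)); auto; apply Usol_sol; auto.
  - exists 1. intros x [i ->]. apply (sol_le1 a Ha i); auto. apply Usol_sol; auto.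
  - assert (Hm : heat_min a ind_pos t n l).
    { split; [intros N; exists (Usol a N); apply dirichlet_of_dir_sol, Usol_sol; auto|].
      intros U HU. replace (fun N => U N t n) with (fun N => Usol a N t n); auto.
      apply functional_extensionality; intros N.
      pose proof (Usol_sol a Ha N). pose proof (dir_sol_of_dirichlet _ _ _ (HU N)).
      apply Rle_antisym; apply (sol_compare a Ha N N); auto. }
    assert (Hp : heat_min a ind_pos t n (phi a t n)) by (unfold phi; apply epsilon_spec; eauto).
    apply Hp. intros N. apply dirichlet_of_dir_sol, Usol_sol; auto.
Qed.

Lemma phi_0 t : 0 <= t -> phi a t 0%nat = 0.
Proof.
  intros Ht. apply (UL_sequence (fun N => Usol a N t 0%nat)); [apply phi_lim; auto|].
  intros eps He. exists 0%nat. intros N _. unfold R_dist.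
  rewrite (sol_zero _ _ _ (Usol_sol a Ha N)), Rminus_diag_eq, Rabs_R0; auto.
Qed.

Lemma phi_nonneg t n : 0 <= t -> 0 <= phi a t n.
Proof.
  intros Ht. apply (lim_ge _ _ _ 0 (phi_lim t n Ht)). intros N _.
  apply (sol_nonneg a Ha N); auto. apply Usol_sol; auto.
Qed.

Lemma diff2_phi_lim t n : 0 <= t ->
  Un_cv (fun N => diff2 (Usol a N t) n) (diff2 (phi a t) n).
Proof.
  intros Ht. unfold diff2.
  apply CV_minus; [apply CV_plus; apply phi_lim; auto | apply cv_scal, phi_lim; auto].
Qed.

Lemma phi_concave t n : 0 <= t -> (1 <= n)%nat -> diff2 (phi a t) n <= 0.
Proof.
  intros Ht Hn. apply (lim_le _ _ _ n (diff2_phi_lim t n Ht)). intros N HN.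
  rewrite <- (dlap_in N (Usol a N)) by lia. apply (dlap_nonpos a Ha N); auto. apply Usol_sol; auto.
Qed.

(* A concave function bounded below is non-decreasing. *)
Lemma phi_mono t n : 0 <= t -> phi a t n <= phi a t (S n).
Proof.
  intros Ht. destruct (Rle_dec (phi a t n) (phi a t (S n))) as [|Hn]; auto. exfalso.
  set (d := phi a t n - phi a t (S n)). assert (Hd : 0 < d) by (unfold d; lra).
  assert (K : forall k, phi a t (S (n + k)) - phi a t (n + k) <= - d /\
                        phi a t (n + k) <= phi a t n - INR k * d).
  { induction k as [|k [I1 I2]]; [rewrite Nat.add_0_r; cbn; unfold d; lra|].
    pose proof (phi_concave t (S (n + k)) Ht ltac:(lia)) as C. unfold diff2 in C.
    replace (S (n + k) - 1)%nat with (n + k)%nat in C by lia.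
    replace (n + S k)%nat with (S (n + k)) by lia. rewrite S_INR. split; lra. }
  destruct (INR_unbounded (phi a t n / d)) as [k Hk].
  destruct (K k) as [_ K2]. pose proof (phi_nonneg t (n + k) Ht).
  apply Rgt_lt, (Rmult_lt_compat_r d) in Hk; auto. unfold Rdiv in Hk.
  rewrite Rmult_assoc, Rinv_l in Hk by lra. lra.
Qed.

(* The Taylor estimate passes to the limit, hence the time derivative of [phi]. *)
Lemma phi_taylor t h n : 0 <= t -> 0 <= t + h -> (1 <= n)%nat ->
  Rabs (phi a (t + h) n - phi a t n - h * (a * diff2 (phi a t) n)) <= 16 * a * a * (h * h).
Proof.
  intros Ht Hth Hn.
  assert (L : Un_cv (fun N => Usol a N (t + h) n - Usol a N t n - h * (a * diff2 (Usol a N t) n))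
                    (phi a (t + h) n - phi a t n - h * (a * diff2 (phi a t) n))).
  { apply CV_minus; [apply CV_minus; apply phi_lim; auto|].
    apply cv_scal, cv_scal, diff2_phi_lim; auto. }
  assert (T : forall N, (n <= N)%nat ->
    Rabs (Usol a N (t + h) n - Usol a N t n - h * (a * diff2 (Usol a N t) n))
    <= 16 * a * a * (h * h)).
  { intros N HN. rewrite <- (dlap_in N (Usol a N)) by lia.
    apply (sol_taylor a Ha N (Usol a N) (Usol_sol a Ha N)); auto; lia. }
  apply Rabs_le. split.
  - apply (lim_ge _ _ _ n L). intros N HN. pose proof (T N HN) as TN. revert TN.
    unfold Rabs. destruct (Rcase_abs _); lra.
  - apply (lim_le _ _ _ n L). intros N HN. pose proof (T N HN) as TN. revert TN.
    unfold Rabs. destruct (Rcase_abs _); lra.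
Qed.

Lemma phi_deriv t n : 0 < t -> (1 <= n)%nat ->
  derivable_pt_lim (fun s => phi a s n) t (a * diff2 (phi a t) n).
Proof.
  intros Ht Hn. apply (derivable_of_quadratic_error _ t _ (16 * a * a) t); auto; [nra|].
  intros h Hh. apply phi_taylor; auto; [lra|]. pose proof (Rabs_def2 _ _ Hh). lra.
Qed.

(* At [n = 0], [phi] is identically [0]. *)
Lemma phi_deriv0 t : 0 < t -> derivable_pt_lim (fun s => phi a s 0%nat) t 0.
Proof.
  intros Ht. apply (derivable_of_quadratic_error _ t _ 0 t); auto; [lra|].
  intros h Hh. pose proof (Rabs_def2 _ _ Hh). rewrite !phi_0 by lra.
  replace (0 - 0 - h * 0) with 0 by ring. rewrite Rabs_R0. lra.
Qed.
End Phi.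

(** Sums against a plan charging only the levels [d(x0,y0) - 1 .. d(x0,y0) + 1]. *)

Section Levels.
Context {V : Type}.
Variable q : V -> V -> R.
Variable rho : V * V -> R.
Variables x0 y0 : V.
Hypothesis Hnn : forall p, 0 <= rho p.
Hypothesis Hfin : exists l, forall p, 0 < rho p -> In p l.
Hypothesis Hmu : forall k : Z, (1 < Z.abs k)%Z -> mu q x0 y0 rho k = 0.

Notation d0 := (gdist q x0 y0).
Notation dp p := (gdist q (fst p) (snd p)).
Notation level p := (Z.of_nat (dp p) - Z.of_nat d0)%Z.

Definition level_part (k : Z) (p : V * V) : R := if Z.eq_dec (level p) k then rho p else 0.

Lemma support_list : exists P0, NoDup P0 /\ forall p, rho p <> 0 -> In p P0.
Proof.
  destruct Hfin as [l Hl]. destruct (nodup_list l) as [P0 [NP0 EP0]]. exists P0. split; auto.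
  intros p H. apply EP0, Hl. destruct (Rle_lt_or_eq_dec _ _ (Hnn p)); auto. congruence.
Qed.

Lemma mu_list P0 k : NoDup P0 -> (forall p, rho p <> 0 -> In p P0) ->
  mu q x0 y0 rho k = sumL P0 (level_part k).
Proof.
  intros NP0 CP0. apply fsum_list; auto. intros p H. apply CP0. intros E; apply H.
  unfold level_part. destruct (Z.eq_dec _ k); auto.
Qed.

Lemma mu_nonneg k : 0 <= mu q x0 y0 rho k.
Proof.
  destruct support_list as [P0 [NP0 CP0]]. rewrite (mu_list P0) by auto.
  apply sumL_nonneg. intros p _. unfold level_part. destruct (Z.eq_dec _ k); [auto | lra].
Qed.

(* No vertex pair is closer than [0]. *)
Lemma mu_diag_neg : d0 = 0%nat -> mu q x0 y0 rho (-1)%Z = 0.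
Proof.
  intros H0. destruct support_list as [P0 [NP0 CP0]]. rewrite (mu_list P0) by auto.
  rewrite (sumL_ext P0 _ (fun _ => 0)); [apply sumL_zero|].
  intros p _. unfold level_part. destruct (Z.eq_dec _ (-1)); [lia | auto].
Qed.

Lemma level_support p : rho p <> 0 -> (Z.abs (level p) <= 1)%Z.
Proof.
  intros H. destruct support_list as [P0 [NP0 CP0]].
  destruct (Z_le_gt_dec (Z.abs (level p)) 1) as [|G]; auto. exfalso.
  pose proof (Hmu (level p) ltac:(lia)) as M. rewrite (mu_list P0) in M by auto.
  assert (Z0 : level_part (level p) p = 0).
  { apply (sumL_nonneg_zero P0); auto.
    intros p' _. unfold level_part. destruct (Z.eq_dec _ _); [auto | lra]. }
  unfold level_part in Z0. destruct (Z.eq_dec (level p) (level p)); congruence.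
Qed.

Lemma fsum_levels (G : nat -> R) : G d0 = 0 ->
  fsum (fun p => rho p * G (dp p)) =
  mu q x0 y0 rho (-1)%Z * G (d0 - 1)%nat + mu q x0 y0 rho 1%Z * G (S d0).
Proof.
  intros HG. destruct support_list as [P0 [NP0 CP0]].
  rewrite (fsum_list _ P0 NP0).
  - rewrite !(mu_list P0), <- !(Rmult_comm (G _)), <- !sumL_scal, <- sumL_plus by auto.
    apply sumL_ext. intros p _. unfold level_part.
    destruct (Req_dec (rho p) 0) as [E|E].
    + rewrite E. destruct (Z.eq_dec _ (-1)); destruct (Z.eq_dec _ 1); ring.
    + pose proof (level_support p E).
      destruct (Z.eq_dec (level p) (-1)); destruct (Z.eq_dec (level p) 1); try lia.
      * replace (dp p) with (d0 - 1)%nat by lia. ring.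
      * replace (dp p) with (S d0) by lia. ring.
      * replace (dp p) with d0 by lia. rewrite HG. ring.
  - intros p H. apply CP0. intros E; apply H; rewrite E; ring.
Qed.

Lemma cost_levels : cost q x0 y0 rho = mu q x0 y0 rho (-1)%Z - mu q x0 y0 rho 1%Z.
Proof.
  unfold cost. rewrite (fsum_levels (fun n => INR d0 - INR n)) by ring.
  rewrite S_INR. destruct d0 as [|n] eqn:E.
  - rewrite mu_diag_neg by auto. ring.
  - replace (S n - 1)%nat with n by lia. rewrite S_INR. ring.
Qed.
End Levels.

(* A non-decreasing concave profile ([0 <= dp <= dm]) seen by a plan bringing at
   least as much mass closer as it moves away ([m1 <= mm]), with [mm >= a]. *)
Lemma profile_inequality dp dm m1 mm a : 0 <= dp <= dm -> 0 <= m1 <= mm -> a <= mm ->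
  dp * m1 - dm * mm <= a * (dp - dm).
Proof.
  intros Hd Hm Ha.
  assert (0 <= (mm - a) * (dm - dp)) by (apply Rmult_le_pos; lra).
  assert (0 <= (mm - m1) * dp) by (apply Rmult_le_pos; lra). nra.
Qed.

Lemma qmin_nonneg {V} (q : V -> V -> R) qmin : is_graph q -> is_qmin q qmin -> 0 <= qmin.
Proof. intros Hg [_ H]. apply H. intros x y _. apply Hg. Qed.

Section PerfectCoupling.
Context {V : Type}.
Variables (q : V -> V -> R) (qmin : R) (qt : V * V -> V * V -> R).
Hypothesis Hpc : perfect_coupling q qmin qt.
Variables x y : V.

Notation rho := (qt (x, y)).

Lemma coupling_plan_nonneg p : 0 <= rho p.
Proof. apply (proj1 (proj1 (proj1 Hpc))). Qed.

Lemma coupling_plan_finite : exists l, forall p, 0 < rho p -> In p l.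
Proof. apply (proj2 (proj1 (proj1 Hpc))). Qed.

Lemma coupling_mu_levels k : (1 < Z.abs k)%Z -> mu q x y rho k = 0.
Proof. apply (proj2 Hpc x y). Qed.

Lemma coupling_lap_levels (Phi : nat -> R) :
  lap qt (fun p => Phi (gdist q (fst p) (snd p))) (x, y) =
  mu q x y rho (-1) * (Phi (gdist q x y - 1)%nat - Phi (gdist q x y)) +
  mu q x y rho 1 * (Phi (S (gdist q x y)) - Phi (gdist q x y)).
Proof.
  exact (fsum_levels q rho x y coupling_plan_nonneg coupling_plan_finite coupling_mu_levels
           (fun n => Phi n - Phi (gdist q x y)) (Rminus_diag_eq _ _ eq_refl)).
Qed.

(* Optimality against a plan of non-negative cost: at least as much mass comes
   closer as moves away. *)
Lemma coupling_mu_order : is_graph q -> reversible q -> connected q -> nonneg_ollivier q ->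
  0 <= mu q x y rho 1 <= mu q x y rho (-1).
Proof.
  intros Hg Hr Hc Hk.
  split; [apply (mu_nonneg q rho x y coupling_plan_nonneg coupling_plan_finite)|].
  destruct (proj1 (proj2 Hpc x y)) as [_ Hopt].
  destruct (nonneg_cost_plan q Hg Hr Hc Hk x y) as [r [Hr1 Hr2]].
  pose proof (Hopt r Hr1) as Hcost.
  rewrite (cost_levels q rho x y coupling_plan_nonneg coupling_plan_finite coupling_mu_levels)
    in Hcost.
  lra.
Qed.
End PerfectCoupling.

Theorem mainTheorem7 (V : Type) (q : V -> V -> R) (qmin : R)
    (qt : V * V -> V * V -> R) :
  countable V -> is_graph q -> reversible q -> connected q ->
  is_qmin q qmin -> nonneg_ollivier q -> perfect_coupling q qmin qt ->
  forall t : R, 0 < t -> forall x y : V,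
    exists D : R,
      derivable_pt_lim (fun s => phi (2 * qmin) s (gdist q x y)) t D /\
      lap qt (fun p => phi (2 * qmin) t (gdist q (fst p) (snd p))) (x, y) <= D.
Proof.
  intros _ Hg Hr Hc Hq Hk Hpc t Ht x y.
  set (a := 2 * qmin).
  assert (Ha : 0 <= a) by (pose proof (qmin_nonneg q qmin Hg Hq); unfold a; lra).
  rewrite (coupling_lap_levels q qmin qt Hpc x y (phi a t)).
  pose proof (coupling_mu_order q qmin qt Hpc x y Hg Hr Hc Hk) as Hmu.
  pose proof (phi_mono a Ha t (gdist q x y) ltac:(lra)) as Hmono.
  set (n := gdist q x y) in *. set (Phi := phi a t) in *.
  destruct (eqdec x y) as [<-|Hne].
  - (* On the diagonal [u] is constant in time and no mass can come closer. *)
    assert (Hn : n = 0%nat) by apply (gdist_refl q Hc).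
    rewrite (mu_diag_neg q _ x x (coupling_plan_nonneg q qmin qt Hpc x x)
               (coupling_plan_finite q qmin qt Hpc x x)) in * by auto.
    exists 0. split; [rewrite Hn; apply phi_deriv0; auto | nra].
  - (* Off the diagonal, [Phi] is non-decreasing and concave at [n >= 1]. *)
    assert (Hn : (1 <= n)%nat) by (apply (gdist_pos q Hc); auto).
    exists (a * diff2 Phi n). split; [apply phi_deriv; auto|].
    pose proof (phi_concave a Ha t n ltac:(lra) Hn : diff2 Phi n <= 0) as Hconc. unfold diff2 in *.
    pose proof (profile_inequality (Phi (S n) - Phi n) (Phi n - Phi (n - 1)%nat)
      (mu q x y (qt (x, y)) 1) (mu q x y (qt (x, y)) (-1)) a ltac:(lra) Hmu
      (proj2 (proj2 (proj2 Hpc x y)) Hne)). lra.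
Qed.
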